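(* Let $\mathcal{R}$ be a left-linear TRS and $\mathcal{C}\subseteq\mathcal{R}$ such that $t\leftrightarrow^*_\mathcal{C}u$ for every parallel critical pair $(t,u)$ between $\mathcal{R}$ and $\mathcal{R}$, and $\ell\to_\mathcal{C}^*r$ for every rule $\ell\to r\in\mathcal{R}{\restriction}_\mathcal{C}$. Then $\mathcal{R}$ is confluent if and only if $\mathcal{C}$ is confluent.
   Context: A TRS is a set of rules $\ell\to r$ ($\ell\notin\mathcal{V}$, $\mathcal{V}ar(r)\subseteq\mathcal{V}ar(\ell)$); left-linear: no variable repeated in a left-hand side; confluent: ${}\leftarrow^*\cdot\to^*\subseteq\to^*\cdot\leftarrow^*$; $\leftrightarrow^*_\mathcal{C}$ the conversion relation of $\mathcal{C}$. $\mathcal{F}un(\mathcal{C})$ is the set of function symbols occurring in rules of $\mathcal{C}$, and $\mathcal{R}{\restriction}_\mathcal{C}=\{\ell\to r\in\mathcal{R}\mid\mathcal{F}un(\ell)\subseteq\mathcal{F}un(\mathcal{C})\}$. Parallel critical pair between $\mathcal{R}$ and $\mathcal{R}$: for variants (renamings) $\ell\to r$ and $\ell_p\to r_p$ ($p\in P$) of $\mathcal{R}$-rules, pairwise variable-disjoint, where $P$ is a non-empty set of pairwise parallel (no one a prefix of another) function-symbol positions of $\ell$, $\sigma$ a most general unifier of $\{\ell_p\approx\ell|_p\}_{p\in P}$, and $\ell_\epsilon\to r_\epsilon$ not a variant of $\ell\to r$ if $P=\{\epsilon\}$ (root): the pair $((\ell\sigma)[r_p\sigma]_{p\in P}, r\sigma)$.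 *)

From Stdlib Require Import List Relations.
Import ListNotations.
Set Implicit Arguments.

(** Terms over function symbols F and variables nat (countably infinite),
    unsorted (variadic) as in IsaFoR. *)
Inductive term (F : Type) : Type :=
| Var : nat -> term F
| Fun : F -> list (term F) -> term F.
Arguments Var {F} _.
Arguments Fun {F} _ _.

Definition rule (F : Type) : Type := (term F * term F)%type.

Fixpoint apply_subst {F} (s : nat -> term F) (t : term F) : term F :=
  match t with
  | Var x => s x
  | Fun f ts => Fun f (map (apply_subst s) ts)
  end.

Fixpoint vars {F} (t : term F) : list nat :=
  match t with
  | Var x => [x]
  | Fun _ ts => flat_map vars ts
  end.

Fixpoint funs {F} (t : term F) : list F :=
  match t with
  | Var _ => []
  | Fun f ts => f :: flat_map funs ts
  end.

Definition pos := list nat.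

Fixpoint subterm_at {F} (t : term F) (p : pos) : option (term F) :=
  match p with
  | [] => Some t
  | i :: q =>
      match t with
      | Var _ => None
      | Fun _ ts =>
          match nth_error ts i with
          | Some u => subterm_at u q
          | None => None
          end
      end
  end.

(** total version (only used at valid positions) *)
Definition subt {F} (t : term F) (p : pos) : term F :=
  match subterm_at t p with Some s => s | None => t end.

Fixpoint map_nth {A} (g : A -> A) (i : nat) (l : list A) : list A :=
  match l, i with
  | [], _ => []
  | a :: l', 0 => g a :: l'
  | a :: l', S j => a :: map_nth g j l'
  end.

Fixpoint replace_at {F} (t : term F) (p : pos) (u : term F) : term F :=
  match p with
  | [] => u
  | i :: q =>
      match t with
      | Var _ => t
      | Fun f ts => Fun f (map_nth (fun s => replace_at s q u) i ts)
      end
  end.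

Definition prefix (p q : pos) : Prop := exists r, q = p ++ r.
Definition parallel (p q : pos) : Prop := ~ prefix p q /\ ~ prefix q p.

Definition fun_pos {F} (t : term F) (p : pos) : Prop :=
  exists f ts, subterm_at t p = Some (Fun f ts).

Definition wf_rule {F} (lr : rule F) : Prop :=
  (forall x, fst lr <> Var x) /\ incl (vars (snd lr)) (vars (fst lr)).

Definition TRS {F} (R : rule F -> Prop) : Prop :=
  forall lr, R lr -> wf_rule lr.

Definition left_linear {F} (R : rule F -> Prop) : Prop :=
  forall l r, R (l, r) -> NoDup (vars l).

Definition rstep {F} (R : rule F -> Prop) (s t : term F) : Prop :=
  exists l r p (sigma : nat -> term F),
    R (l, r) /\ subterm_at s p = Some (apply_subst sigma l) /\
    t = replace_at s p (apply_subst sigma r).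

Definition rsteps {F} (R : rule F -> Prop) := clos_refl_trans (term F) (rstep R).
Definition conv {F} (R : rule F -> Prop) := clos_refl_sym_trans (term F) (rstep R).

Definition confluent {F} (R : rule F -> Prop) : Prop :=
  forall s t u, rsteps R s t -> rsteps R s u ->
    exists v, rsteps R t v /\ rsteps R u v.

Definition fun_of {F} (C : rule F -> Prop) (f : F) : Prop :=
  exists l r, C (l, r) /\ (In f (funs l) \/ In f (funs r)).

Definition restrict {F} (R C : rule F -> Prop) (lr : rule F) : Prop :=
  R lr /\ forall f, In f (funs (fst lr)) -> fun_of C f.

Definition renaming (rho : nat -> nat) : Prop :=
  exists rho', (forall x, rho' (rho x) = x) /\ (forall x, rho (rho' x) = x).

Definition variant {F} (lr' lr : rule F) : Prop :=
  exists rho, renaming rho /\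
    fst lr' = apply_subst (fun x => Var (rho x)) (fst lr) /\
    snd lr' = apply_subst (fun x => Var (rho x)) (snd lr).

Definition variant_in {F} (R : rule F -> Prop) (lr' : rule F) : Prop :=
  exists lr, R lr /\ variant lr' lr.

Definition rule_vars {F} (lr : rule F) : list nat := vars (fst lr) ++ vars (snd lr).

Definition var_disjoint {F} (a b : rule F) : Prop :=
  forall x, In x (rule_vars a) -> ~ In x (rule_vars b).

Definition unifies {F} (sigma : nat -> term F) (E : list (term F * term F)) : Prop :=
  forall a b, In (a, b) E -> apply_subst sigma a = apply_subst sigma b.

Definition is_mgu {F} (sigma : nat -> term F) (E : list (term F * term F)) : Prop :=
  unifies sigma E /\
  forall tau, unifies tau E ->
    exists delta, forall x, tau x = apply_subst delta (sigma x).

(** Parallel critical pairs between R and R.  The list [steps] pairs each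
    position p ∈ P with the rule variant l_p -> r_p used there. *)
Definition pcp {F} (R : rule F -> Prop) (t u : term F) : Prop :=
  exists (l r : term F) (steps : list (pos * rule F)) (sigma : nat -> term F),
    variant_in R (l, r) /\
    steps <> [] /\
    Forall (fun pr => variant_in R (snd pr) /\ fun_pos l (fst pr)) steps /\
    ForallOrdPairs (fun a b => parallel (fst a) (fst b)) steps /\
    ForallOrdPairs var_disjoint ((l, r) :: map snd steps) /\
    is_mgu sigma (map (fun pr => (fst (snd pr), subt l (fst pr))) steps) /\
    (forall lr', steps = [([], lr')] -> ~ variant lr' (l, r)) /\
    t = fold_left (fun acc pr => replace_at acc (fst pr) (apply_subst sigma (snd (snd pr))))
                  steps (apply_subst sigma l) /\
    u = apply_subst sigma r.

(* Both directions rest on left-linearity.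

   If C is confluent: by the parallel critical pair lemma, a parallel R-step
   from an instance of a left-hand side either takes place below the variables
   of that left-hand side, or its redexes at function positions form an instance
   of a parallel critical pair, so the result is C-convertible to the root
   contractum.  Hence parallel R-steps commute with C-steps and have the diamond
   property up to C-conversion; since C is confluent, C-conversion is
   C-joinability, and a strip argument for the relation ↔*_C · ⇉_R gives the
   confluence of R.

   If R is confluent: split a term into its maximal cap over Fun(C) and the
   aliens below it, whose roots lie outside Fun(C).  C-steps never touch alien
   roots, so a C-peak projects to a peak on the cap; R joins it, and as the cap
   only contains symbols of Fun(C), these R-steps use rules of R|_C and are
   simulated by C.  The aliens are joined by induction on term size. *)

From Pilot Require Import Defs.
From Stdlib Require Import List Relations Lia PeanoNat Bool Classical Permutation.
Import ListNotations.
Set Implicit Arguments.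

Lemma NoDup_app_disjoint (A : Type) (a b : list A) x :
  NoDup (a ++ b) -> In x a -> In x b -> False.
Proof.
  induction a; simpl; intros H Ha Hb; [contradiction|].
  inversion H; subst. destruct Ha; subst; eauto.
  apply H2. apply in_or_app; auto.
Qed.

Lemma NoDup_flat_map_in {A B : Type} {g : A -> list B} {ls l} :
  NoDup (flat_map g ls) -> In l ls -> NoDup (g l).
Proof.
  induction ls; simpl; intros H Hl; [contradiction|]. destruct Hl; subst.
  eapply NoDup_app_remove_r; eauto. apply IHls; auto. eapply NoDup_app_remove_l; eauto.
Qed.

Lemma Forall2_impl_in (A B : Type) (Q Q' : A -> B -> Prop) la lb :
  (forall a b, In a la -> Q a b -> Q' a b) -> Forall2 Q la lb -> Forall2 Q' la lb.
Proof. intros H H2. induction H2; constructor; simpl in *; auto. Qed.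

Lemma Forall2_map_r (A B C : Type) (Q : A -> C -> Prop) (g : B -> C) la lb :
  Forall2 Q la (map g lb) <-> Forall2 (fun a b => Q a (g b)) la lb.
Proof.
  split.
  - revert la; induction lb; intros la H; inversion H; subst; constructor; auto.
  - induction 1; constructor; auto.
Qed.

Lemma Forall2_map_l (A B C : Type) (Q : C -> B -> Prop) (g : A -> C) la lb :
  Forall2 Q (map g la) lb <-> Forall2 (fun a b => Q (g a) b) la lb.
Proof.
  split.
  - revert lb; induction la; intros lb H; inversion H; subst; constructor; auto.
  - induction 1; constructor; auto.
Qed.

Lemma Forall_Forall2 (A B : Type) (P : A -> Prop) (Q : A -> B -> Prop) la lb :
  Forall P la -> Forall2 Q la lb -> Forall2 (fun a b => P a /\ Q a b) la lb.
Proof. intros H1 H2. induction H2; inversion H1; constructor; auto. Qed.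

Lemma fold_left_map_in (X Y Z : Type) (f : Z -> Y -> Z) (g : X -> Y) l a :
  fold_left f (map g l) a = fold_left (fun acc x => f acc (g x)) l a.
Proof. revert a; induction l; simpl; auto. Qed.

Lemma FOP_app (X : Type) (Rl : X -> X -> Prop) l1 l2 :
  ForallOrdPairs Rl l1 -> ForallOrdPairs Rl l2 -> (forall a b, In a l1 -> In b l2 -> Rl a b) ->
  ForallOrdPairs Rl (l1 ++ l2).
Proof.
  induction 1; simpl; intros H2 H3; auto.
  constructor. apply Forall_app; split; auto. rewrite Forall_forall; intros; apply H3; simpl; auto.
  apply IHForallOrdPairs; auto.
Qed.

Lemma FOP_map_in (X Y : Type) (Rl : X -> X -> Prop) (Rl' : Y -> Y -> Prop) (g : X -> Y) l :
  ForallOrdPairs Rl l -> (forall a b, In a l -> In b l -> Rl a b -> Rl' (g a) (g b)) ->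
  ForallOrdPairs Rl' (map g l).
Proof.
  induction 1; simpl; intros Hg; constructor.
  - apply Forall_map. rewrite Forall_forall in *. intros b Hb. apply Hg; simpl; auto.
  - apply IHForallOrdPairs. intros; apply Hg; simpl; auto.
Qed.

Lemma FOP_map_inv (X Y : Type) (Rl : Y -> Y -> Prop) (g : X -> Y) l :
  ForallOrdPairs Rl (map g l) -> ForallOrdPairs (fun a b => Rl (g a) (g b)) l.
Proof.
  induction l as [|a l IH]; simpl; intros H; [constructor|].
  inversion H as [|x y Hf Hr]; subst. constructor.
  - apply (proj1 (Forall_map g (Rl (g a)) l)) in Hf. exact Hf.
  - apply IH. exact Hr.
Qed.

Lemma flat_map_map_ext (X Y Z : Type) (g : Y -> list Z) (h : X -> Y) (g' : X -> list Z) l :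
  Forall (fun a => g (h a) = g' a) l -> flat_map g (map h l) = flat_map g' l.
Proof. induction 1; simpl; auto. congruence. Qed.

Lemma NoDup_app_iff (X : Type) (a b : list X) :
  NoDup (a ++ b) <-> NoDup a /\ NoDup b /\ (forall x, In x a -> ~ In x b).
Proof.
  split.
  - intros H. split; [eapply NoDup_app_remove_r; eauto|].
    split; [eapply NoDup_app_remove_l; eauto|].
    intros x H1 H2. eapply NoDup_app_disjoint; eauto.
  - intros [H1 [H2 H3]]. apply NoDup_app; auto.
Qed.

Lemma NoDup_app_incl (X : Type) (a b a' b' : list X) :
  NoDup (a ++ b) -> NoDup a' -> NoDup b' -> incl a' a -> incl b' b -> NoDup (a' ++ b').
Proof.
  rewrite !NoDup_app_iff. intros [_ [_ H]] H1 H2 I1 I2. repeat split; auto.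
  intros x Ha Hb. apply (H x); auto.
Qed.

Lemma flat_map_app_perm (X Y : Type) (g1 g2 : X -> list Y) l :
  Permutation (flat_map (fun e => g1 e ++ g2 e) l) (flat_map g1 l ++ flat_map g2 l).
Proof.
  induction l; simpl; auto.
  rewrite <- !app_assoc. apply Permutation_app_head.
  eapply perm_trans. apply Permutation_app_head. exact IHl.
  rewrite !app_assoc. apply Permutation_app_tail. apply Permutation_app_comm.
Qed.

Lemma NoDup_flat_map_incl (X Y : Type) (g h : X -> list Y) l :
  NoDup (flat_map g l) -> (forall e, NoDup (g e) -> NoDup (h e) /\ incl (h e) (g e)) ->
  NoDup (flat_map h l).
Proof.
  induction l as [|e l IH]; simpl; intros Hnd Hgh; [constructor|].
  apply NoDup_app_iff in Hnd as [N1 [N2 N3]]. destruct (Hgh e N1) as [M1 M2].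
  apply NoDup_app_iff. repeat split; auto. intros x Hx Hx2. apply (N3 x); auto.
  apply in_flat_map in Hx2 as [e' [He' Hx2]]. apply in_flat_map. exists e'. split; auto.
  apply (proj2 (Hgh e' (NoDup_flat_map_in N2 He'))). auto.
Qed.

Lemma lt_S_list_max x L : In x L -> x < S (list_max L).
Proof.
  intros H. assert (Hle : Forall (fun k => k <= list_max L) L) by (apply list_max_le; auto).
  rewrite Forall_forall in Hle. specialize (Hle x H). lia.
Qed.

Section Terms.
Variable F : Type.
Notation term := (term F).

Section NestedInduction.
Variable P : term -> Prop.
Hypothesis HVar : forall x, P (Var x).
Hypothesis HFun : forall f ts, Forall P ts -> P (Fun f ts).

Fixpoint term_nested_ind (t : term) : P t :=
  match t with
  | Var x => HVar x
  | Fun f ts => HFun f ((fix go (l : list term) : Forall P l :=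
      match l with
      | [] => Forall_nil _
      | u :: l' => Forall_cons _ (term_nested_ind u) (go l')
      end) ts)
  end.
End NestedInduction.

Fixpoint term_size (t : term) : nat :=
  match t with Var _ => 1 | Fun _ ts => S (list_sum (map term_size ts)) end.

Lemma term_size_pos t : 1 <= term_size t.
Proof. destruct t; simpl; lia. Qed.

Lemma term_size_arg f ts t : In t ts -> term_size t < term_size (Fun f ts).
Proof.
  simpl. induction ts as [|u ts IH]; simpl; intros H; [contradiction|].
  destruct H as [H|H]; subst; try lia. specialize (IH H). lia.
Qed.

Lemma subst_subst (s1 s2 : nat -> term) t :
  apply_subst s2 (apply_subst s1 t) = apply_subst (fun x => apply_subst s2 (s1 x)) t.
Proof.
  induction t using term_nested_ind; simpl; auto.
  f_equal. rewrite map_map. apply map_ext_in. intros a Ha.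
  rewrite Forall_forall in H. auto.
Qed.

Lemma subst_ext_in (s1 s2 : nat -> term) t :
  (forall x, In x (vars t) -> s1 x = s2 x) -> apply_subst s1 t = apply_subst s2 t.
Proof.
  induction t using term_nested_ind; simpl; intros Hx; auto.
  f_equal. apply map_ext_in. intros a Ha.
  rewrite Forall_forall in H. apply H; auto.
  intros x Hx'. apply Hx. apply in_flat_map. eauto.
Qed.

Lemma subst_Var t : apply_subst (@Var F) t = t.
Proof.
  induction t using term_nested_ind; simpl; auto.
  f_equal. rewrite Forall_forall in H. rewrite <- (map_id ts) at 2.
  apply map_ext_in. auto.
Qed.

Lemma subst_id_on (mu : nat -> term) t :
  (forall y, In y (vars t) -> mu y = Var y) -> apply_subst mu t = t.
Proof. intros H. rewrite (subst_ext_in mu (@Var F) t); [apply subst_Var|auto]. Qed.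

Lemma subst_eq_on_vars (s1 s2 : nat -> term) t :
  apply_subst s1 t = apply_subst s2 t -> forall x, In x (vars t) -> s1 x = s2 x.
Proof.
  induction t using term_nested_ind; simpl; intros E y Hy.
  - destruct Hy as [<-|[]]; auto.
  - injection E as E. apply in_flat_map in Hy as [a [Ha Hy]].
    rewrite Forall_forall in H. apply (H a Ha); auto.
    clear - E Ha. induction ts; simpl in *; [contradiction|].
    injection E as E1 E2. destruct Ha; subst; auto.
Qed.

Lemma vars_rename (rho : nat -> nat) t :
  vars (apply_subst (fun x => @Var F (rho x)) t) = map rho (vars t).
Proof.
  induction t using term_nested_ind; simpl; auto.
  rewrite flat_map_concat_map, map_map, flat_map_concat_map, concat_map, map_map.
  f_equal. apply map_ext_in. intros a Ha. rewrite Forall_forall in H. auto.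
Qed.

Lemma in_funs_subst_inv f (s : nat -> term) t :
  In f (funs (apply_subst s t)) ->
  In f (funs t) \/ exists y, In y (vars t) /\ In f (funs (s y)).
Proof.
  induction t using term_nested_ind; simpl; intros Hx.
  - right. exists x. auto.
  - destruct Hx as [Hx|Hx]; [left; left; auto|].
    apply in_flat_map in Hx as [a [Ha Hx]]. apply in_map_iff in Ha as [b [<- Hb]].
    rewrite Forall_forall in H. destruct (H b Hb Hx) as [H1|[y [Hy1 Hy2]]].
    + left. right. apply in_flat_map. eauto.
    + right. exists y. split; auto. apply in_flat_map. eauto.
Qed.

Lemma in_funs_subst_l f (s : nat -> term) t :
  In f (funs t) -> In f (funs (apply_subst s t)).
Proof.
  induction t using term_nested_ind; simpl; intros Hx; try contradiction.
  destruct Hx as [Hx|Hx]; [left; auto|right].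
  apply in_flat_map in Hx as [a [Ha Hx]]. apply in_flat_map.
  exists (apply_subst s a). split. apply in_map; auto.
  rewrite Forall_forall in H. auto.
Qed.

Lemma in_funs_subst_r f (s : nat -> term) t y :
  In y (vars t) -> In f (funs (s y)) -> In f (funs (apply_subst s t)).
Proof.
  induction t using term_nested_ind; simpl; intros Hy Hx.
  - destruct Hy as [<-|[]]; auto.
  - right. apply in_flat_map in Hy as [a [Ha Hy]]. apply in_flat_map.
    exists (apply_subst s a). split. apply in_map; auto.
    rewrite Forall_forall in H. eauto.
Qed.

Lemma replace_at_nil (t u : term) : replace_at t [] u = u.
Proof. destruct t; reflexivity. Qed.

End Terms.

Section Rewriting.
Variable F : Type.
Notation term := (term F).
Implicit Types R A : rule F -> Prop.

Inductive ctx_step R : term -> term -> Prop :=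
| ctx_root l r (s : nat -> term) : R (l, r) -> ctx_step R (apply_subst s l) (apply_subst s r)
| ctx_arg f ts1 t t' ts2 : ctx_step R t t' ->
    ctx_step R (Fun f (ts1 ++ t :: ts2)) (Fun f (ts1 ++ t' :: ts2)).

Lemma nth_error_split (ts : list term) i u g :
  nth_error ts i = Some u ->
  exists ts1 ts2, ts = ts1 ++ u :: ts2 /\ length ts1 = i /\
    Defs.map_nth g i ts = ts1 ++ g u :: ts2.
Proof.
  revert i. induction ts as [|a ts IH]; intros [|i] H; simpl in H; try discriminate.
  - injection H as <-. exists [], ts. auto.
  - destruct (IH i H) as [ts1 [ts2 [E1 [E2 E3]]]]. exists (a :: ts1), ts2.
    simpl. rewrite E3, <- E2, E1. auto.
Qed.

Lemma map_nth_app (ts1 ts2 : list term) u g :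
  Defs.map_nth g (length ts1) (ts1 ++ u :: ts2) = ts1 ++ g u :: ts2.
Proof. induction ts1; simpl; f_equal; auto. Qed.

Lemma rstep_iff_ctx_step R s t : rstep R s t <-> ctx_step R s t.
Proof.
  split.
  - intros [l [r [p [sg [HR [Hs Ht]]]]]]. subst t. revert s Hs.
    induction p as [|i p IH]; intros s Hs; simpl in *.
    + injection Hs as ->. rewrite replace_at_nil. apply ctx_root; auto.
    + destruct s as [x|f ts]; try discriminate.
      destruct (nth_error ts i) as [u|] eqn:E; try discriminate.
      destruct (nth_error_split _ _ (fun s => replace_at s p (apply_subst sg r)) E)
        as [ts1 [ts2 [E1 [E2 E3]]]].
      simpl. rewrite E3, E1. constructor. apply IH. auto.
  - induction 1 as [l r s HR|f ts1 t t' ts2 _ [l [r [p [sg [HR [Hs Ht]]]]]]].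
    + exists l, r, [], s. rewrite replace_at_nil. auto.
    + exists l, r, (length ts1 :: p), sg. split; auto. simpl.
      rewrite nth_error_app2, Nat.sub_diag by lia. split; auto.
      rewrite map_nth_app. congruence.
Qed.

Lemma rsteps_iff_ctx_steps R s t :
  rsteps R s t <-> clos_refl_trans _ (ctx_step R) s t.
Proof.
  split; induction 1; try (econstructor; eauto; fail);
    apply rt_step; apply rstep_iff_ctx_step; auto.
Qed.

Lemma conv_iff_ctx_conv R s t :
  conv R s t <-> clos_refl_sym_trans _ (ctx_step R) s t.
Proof.
  split; induction 1; try (econstructor; eauto; fail);
    apply rst_step; apply rstep_iff_ctx_step; auto.
Qed.

Lemma rsteps_of_ctx_step R s t : ctx_step R s t -> rsteps R s t.
Proof. intros; apply rt_step, rstep_iff_ctx_step; auto. Qed.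

Lemma rsteps_conv R s t : rsteps R s t -> conv R s t.
Proof. induction 1; [apply rst_step | apply rst_refl | eapply rst_trans]; eauto. Qed.

Lemma rsteps_mono A B s t :
  (forall lr, A lr -> B lr) -> rsteps A s t -> rsteps B s t.
Proof.
  intros HAB Hs. apply rsteps_iff_ctx_steps in Hs. apply rsteps_iff_ctx_steps.
  induction Hs; eauto using rt_trans, rt_refl.
  apply rt_step. induction H; constructor; auto.
Qed.

Lemma ctx_step_subst R s t (sg : nat -> term) :
  ctx_step R s t -> ctx_step R (apply_subst sg s) (apply_subst sg t).
Proof.
  induction 1; simpl.
  - rewrite !subst_subst. constructor; auto.
  - rewrite !map_app. simpl. constructor; auto.
Qed.

Lemma rsteps_subst R s t (sg : nat -> term) :
  rsteps R s t -> rsteps R (apply_subst sg s) (apply_subst sg t).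
Proof.
  rewrite !rsteps_iff_ctx_steps.
  induction 1; [apply rt_step, ctx_step_subst; auto|apply rt_refl|eapply rt_trans; eauto].
Qed.

Lemma conv_subst R s t (sg : nat -> term) :
  conv R s t -> conv R (apply_subst sg s) (apply_subst sg t).
Proof.
  rewrite !conv_iff_ctx_conv.
  induction 1; [apply rst_step, ctx_step_subst; auto|apply rst_refl|
                apply rst_sym; auto|eapply rst_trans; eauto].
Qed.

Lemma rsteps_arg R f ts1 ts2 t t' :
  rsteps R t t' -> rsteps R (Fun f (ts1 ++ t :: ts2)) (Fun f (ts1 ++ t' :: ts2)).
Proof.
  rewrite !rsteps_iff_ctx_steps.
  induction 1; [apply rt_step; constructor; auto|apply rt_refl|eapply rt_trans; eauto].
Qed.

Lemma conv_arg R f ts1 ts2 t t' :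
  conv R t t' -> conv R (Fun f (ts1 ++ t :: ts2)) (Fun f (ts1 ++ t' :: ts2)).
Proof.
  rewrite !conv_iff_ctx_conv.
  induction 1; [apply rst_step; constructor; auto|apply rst_refl|
                apply rst_sym; auto|eapply rst_trans; eauto].
Qed.

Lemma rsteps_args R f ss ts : Forall2 (rsteps R) ss ts -> rsteps R (Fun f ss) (Fun f ts).
Proof.
  intros H. enough (forall pre, rsteps R (Fun f (pre ++ ss)) (Fun f (pre ++ ts)))
    by apply (H0 []).
  induction H; intros pre. apply rt_refl.
  eapply rt_trans. apply rsteps_arg. eauto.
  specialize (IHForall2 (pre ++ [y])). rewrite <- !app_assoc in IHForall2. exact IHForall2.
Qed.

Lemma conv_args R f ss ts : Forall2 (conv R) ss ts -> conv R (Fun f ss) (Fun f ts).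
Proof.
  intros H. enough (forall pre, conv R (Fun f (pre ++ ss)) (Fun f (pre ++ ts)))
    by apply (H0 []).
  induction H; intros pre. apply rst_refl.
  eapply rst_trans. apply conv_arg. eauto.
  specialize (IHForall2 (pre ++ [y])). rewrite <- !app_assoc in IHForall2. exact IHForall2.
Qed.

Lemma joinable_args R ss ts :
  Forall2 (fun a b => exists v, rsteps R a v /\ rsteps R b v) ss ts ->
  exists ws, Forall2 (rsteps R) ss ws /\ Forall2 (rsteps R) ts ws.
Proof.
  induction 1 as [|a b ss ts [v [H1 H2]] _ [ws [W1 W2]]]; [exists []; auto|].
  exists (v :: ws). split; constructor; auto.
Qed.

Lemma conv_joinable R : confluent R ->
  forall a b, conv R a b -> exists v, rsteps R a v /\ rsteps R b v.
Proof.
  intros Hconf a b. induction 1 as [x y H|x|x y _ [v [H1 H2]]|x y z _ [v1 [A1 A2]] _ [v2 [B1 B2]]].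
  - exists y. split; [apply rt_step; auto|apply rt_refl].
  - exists x. split; apply rt_refl.
  - eauto.
  - destruct (Hconf _ _ _ A2 B1) as [w [W1 W2]]. exists w. split; eapply rt_trans; eauto.
Qed.

Inductive par A : term -> term -> Prop :=
| par_var x : par A (Var x) (Var x)
| par_fun f ss ts : Forall2 (par A) ss ts -> par A (Fun f ss) (Fun f ts)
| par_root l r (s : nat -> term) : A (l, r) -> par A (apply_subst s l) (apply_subst s r).

Lemma par_refl A t : par A t t.
Proof.
  induction t using term_nested_ind. constructor. constructor.
  induction ts; constructor; inversion H; auto.
Qed.

Lemma par_subst A t (s1 s2 : nat -> term) :
  (forall x, In x (vars t) -> par A (s1 x) (s2 x)) ->
  par A (apply_subst s1 t) (apply_subst s2 t).
Proof.
  induction t using term_nested_ind; simpl; intros Hx; auto.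
  constructor. induction ts; simpl; constructor; inversion H; subst.
  - apply H2. intros; apply Hx; simpl; apply in_or_app; auto.
  - apply IHts; auto. intros; apply Hx; simpl; apply in_or_app; auto.
Qed.

Lemma par_of_ctx_step A s t : ctx_step A s t -> par A s t.
Proof.
  induction 1. constructor; auto. constructor. apply Forall2_app.
  - induction ts1; constructor; auto. apply par_refl.
  - constructor; auto. induction ts2; constructor; auto. apply par_refl.
Qed.

Lemma rsteps_of_par A s t : par A s t -> rsteps A s t.
Proof.
  revert t. induction s using term_nested_ind; intros t Hp; inversion Hp; subst;
    try (apply rsteps_of_ctx_step; constructor; auto; fail); try apply rt_refl.
  apply rsteps_args. clear Hp.
  match goal with HH : Forall2 _ _ _ |- _ => revert ts0 HH end.
  induction H; intros us Hus; inversion Hus; subst; constructor; auto.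
Qed.

End Rewriting.

Section LinearMatching.
Variable F : Type.
Notation term := (term F).

(* Instances of the arguments of a linear term can be glued into one instance,
   since the arguments have pairwise disjoint variables. *)
Lemma linear_instances_glue (M : term -> term -> Prop) (s0 : nat -> term) ts cs :
  NoDup (flat_map vars ts) ->
  Forall2 (fun l c => exists s, c = apply_subst s l /\
                                forall x, In x (vars l) -> M (s0 x) (s x)) ts cs ->
  exists s, cs = map (apply_subst s) ts /\
            forall x, In x (flat_map vars ts) -> M (s0 x) (s x).
Proof.
  intros Hnd H. induction H as [|l c ts cs [s1 [E1 H1]] _ IH].
  - exists (@Var F). split; [reflexivity|intros x []].
  - simpl in Hnd. destruct IH as [s2 [E2 H2]]; [eapply NoDup_app_remove_l; eauto|].
    set (s := fun x => if in_dec Nat.eq_dec x (vars l) then s1 x else s2 x).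
    assert (Hs1 : forall x, In x (vars l) -> s x = s1 x).
    { intros x Hx. unfold s. destruct (in_dec Nat.eq_dec x (vars l)); tauto. }
    assert (Hs2 : forall x, In x (flat_map vars ts) -> s x = s2 x).
    { intros x Hx. unfold s. destruct (in_dec Nat.eq_dec x (vars l)); auto.
      exfalso. eapply NoDup_app_disjoint; eauto. }
    exists s. split.
    + simpl. rewrite E1, E2. f_equal.
      * apply subst_ext_in. intros x Hx. symmetry. auto.
      * apply map_ext_in. intros a Ha. apply subst_ext_in. intros x Hx.
        symmetry. apply Hs2, in_flat_map. eauto.
    + intros x Hx. apply in_app_or in Hx as [Hx|Hx].
      * rewrite Hs1; auto.
      * rewrite Hs2; auto.
Qed.

End LinearMatching.

Section Caps.
Variable F : Type.
Notation term := (term F).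
Variable C : rule F -> Prop.
Hypothesis C_left_linear : forall l r, C (l, r) -> NoDup (vars l).
Hypothesis C_vars_incl : forall l r, C (l, r) -> incl (vars r) (vars l).

Definition cap_term (t : term) := forall f, In f (funs t) -> fun_of C f.

Definition joinable (a b : term) := exists v, rsteps C a v /\ rsteps C b v.

Definition alien_reduct (a t : term) : Prop :=
  (exists y, a = Var y /\ t = Var y) \/
  (exists h ss ts, a = Fun h ss /\ t = Fun h ts /\ ~ fun_of C h /\ Forall2 (rsteps C) ss ts).

Inductive cap_match (th : nat -> term) : term -> term -> Prop :=
| cap_match_var x t : alien_reduct (th x) t -> cap_match th (Var x) t
| cap_match_fun f cs ts : Forall2 (cap_match th) cs ts -> cap_match th (Fun f cs) (Fun f ts).

Lemma cap_match_subst th t (s0 s : nat -> term) :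
  (forall x, In x (vars t) -> cap_match th (s0 x) (s x)) ->
  cap_match th (apply_subst s0 t) (apply_subst s t).
Proof.
  induction t using term_nested_ind; simpl; intros Hx; auto.
  constructor. apply Forall2_map_l, Forall2_map_r. induction ts; constructor; inversion H; subst.
  - apply H2. intros; apply Hx; simpl; apply in_or_app; auto.
  - apply IHts; auto. intros; apply Hx; simpl; apply in_or_app; auto.
Qed.

Lemma cap_match_instance_r th l : NoDup (vars l) -> cap_term l ->
  forall c (s : nat -> term), cap_match th c (apply_subst s l) ->
  exists s0, c = apply_subst s0 l /\ forall x, In x (vars l) -> cap_match th (s0 x) (s x).
Proof.
  induction l as [y|f ts IH] using term_nested_ind; intros Hnd Hcap c s HG.
  - exists (fun _ => c). simpl. split; auto. intros z [<-|[]]; auto.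
  - simpl in HG.
    inversion HG as [x t [[y [_ E]]|[h [ss [ts0 [_ [E [Hh _]]]]]]] E1 E2|f' cs ts' Hcs]; subst.
    + discriminate.
    + injection E as -> _. exfalso. apply Hh, Hcap. simpl; auto.
    + apply Forall2_flip, Forall2_map_l in Hcs.
      edestruct linear_instances_glue with (M := fun a b => cap_match th b a) (s0 := s) (cs := cs)
        as [s0 [-> Hs0]]; [exact Hnd| |exists s0; auto].
      eapply Forall2_impl_in; [|exact (Forall_Forall2 IH Hcs)]. intros a b Ha [IHa HGab].
      apply IHa; auto.
      * exact (NoDup_flat_map_in (g := vars) Hnd Ha).
      * intros g Hg. apply Hcap. simpl. right. apply in_flat_map; eauto.
Qed.

Lemma cap_match_instance_l th l : NoDup (vars l) ->
  forall t (s0 : nat -> term), cap_match th (apply_subst s0 l) t ->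
  exists s, t = apply_subst s l /\ forall x, In x (vars l) -> cap_match th (s0 x) (s x).
Proof.
  induction l as [y|f ts IH] using term_nested_ind; intros Hnd t s0 HG.
  - exists (fun _ => t). simpl. split; auto. intros z [<-|[]]; auto.
  - simpl in HG. inversion HG as [|f' cs ts' Hcs]; subst.
    apply (proj1 (@Forall2_map_l _ _ _ (cap_match th) (apply_subst s0) ts ts')) in Hcs.
    edestruct linear_instances_glue with (M := cap_match th) (s0 := s0) (cs := ts')
      as [s [-> Hs]]; [exact Hnd| |exists s; auto].
    eapply Forall2_impl_in; [|exact (Forall_Forall2 IH Hcs)]. intros a b Ha [IHa HGab].
    apply IHa; auto. exact (NoDup_flat_map_in (g := vars) Hnd Ha).
Qed.

Lemma cap_term_lhs l r : C (l, r) -> cap_term l.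
Proof. intros HC f Hf. exists l, r. auto. Qed.

(* A C-step on the right of [cap_match] either stays inside an alien or is
   mirrored by a C-step of the cap: C-redexes never overlap alien roots. *)
Lemma cap_match_ctx_step_r th t t' : ctx_step C t t' ->
  forall c, cap_match th c t -> cap_match th c t' \/ exists c', ctx_step C c c' /\ cap_match th c' t'.
Proof.
  induction 1 as [l r s HC|f ts1 t0 t0' ts2 Hst IH]; intros c HG.
  - destruct (@cap_match_instance_r th l (C_left_linear HC) (cap_term_lhs HC) _ s HG) as [s0 [-> Hs0]].
    right. exists (apply_subst s0 r). split. constructor; auto.
    apply cap_match_subst. intros x Hx. apply Hs0. apply (C_vars_incl HC); auto.
  - inversion HG as [x t [[y [_ E]]|[h [ss [ts [E1 [E2 [E3 E4]]]]]]]|f' cs ts Hcs]; subst.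
    + discriminate.
    + left. constructor. injection E2 as <- <-. right. exists f, ss, (ts1 ++ t0' :: ts2).
      repeat split; auto.
      apply Forall2_app_inv_r in E4 as [l1 [l2 [A1 [A2 ->]]]].
      inversion A2; subst. apply Forall2_app; auto. constructor; auto.
      eapply rt_trans; eauto. apply rsteps_of_ctx_step; auto.
    + apply Forall2_app_inv_r in Hcs as [l1 [l2 [A1 [A2 ->]]]].
      destruct l2 as [|c0 l2']; inversion A2; subst.
      destruct (IH _ H2) as [H5|[c' [Hc' HGc']]].
      * left. constructor. apply Forall2_app; auto.
      * right. exists (Fun f (l1 ++ c' :: l2')). split. constructor; auto.
        constructor. apply Forall2_app; auto.
Qed.

Lemma cap_match_rsteps_r th c0 t0 t : cap_match th c0 t0 -> rsteps C t0 t ->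
  exists c, rsteps C c0 c /\ cap_match th c t.
Proof.
  intros HG Hs. apply rsteps_iff_ctx_steps, clos_rt_rtn1_iff in Hs.
  induction Hs as [|y z Hyz Hs [c [Hc HGc]]]; [exists c0; split; auto; apply rt_refl|].
  destruct (cap_match_ctx_step_r Hyz HGc) as [H|[c' [Hc' HG']]]; [exists c; auto|].
  exists c'. split; auto. eapply rt_trans; eauto. apply rsteps_of_ctx_step; auto.
Qed.

Lemma cap_match_ctx_step_l th c c' : ctx_step C c c' ->
  forall t, cap_match th c t -> exists t', ctx_step C t t' /\ cap_match th c' t'.
Proof.
  induction 1 as [l r s0 HC|f ts1 t0 t0' ts2 Hst IH]; intros t HG.
  - destruct (@cap_match_instance_l th l (C_left_linear HC) _ s0 HG) as [s [-> Hs]].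
    exists (apply_subst s r). split. constructor; auto.
    apply cap_match_subst. intros x Hx. apply Hs. apply (C_vars_incl HC); auto.
  - inversion HG as [|f' cs ts Hcs]; subst.
    apply Forall2_app_inv_l in Hcs as [l1 [l2 [A1 [A2 ->]]]].
    destruct l2 as [|u0 l2']; inversion A2; subst.
    destruct (IH _ H2) as [u' [Hu' HGu']].
    exists (Fun f (l1 ++ u' :: l2')). split. constructor; auto.
    constructor. apply Forall2_app; auto.
Qed.

Lemma cap_match_rsteps_l th c c' t : rsteps C c c' -> cap_match th c t ->
  exists t', rsteps C t t' /\ cap_match th c' t'.
Proof.
  intros Hs. revert t. apply rsteps_iff_ctx_steps, clos_rt_rt1n_iff in Hs.
  induction Hs as [|x y z Hxy Hs IH]; intros t HG; [exists t; split; auto; apply rt_refl|].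
  destruct (cap_match_ctx_step_l Hxy HG) as [t1 [H1 HG1]].
  destruct (IH _ HG1) as [t2 [H2 HG2]].
  exists t2. split; auto. eapply rt_trans; eauto. apply rsteps_of_ctx_step; auto.
Qed.

Lemma cap_match_joinable th :
  (forall x a1 a2, alien_reduct (th x) a1 -> alien_reduct (th x) a2 -> joinable a1 a2) ->
  forall d v1 v2, cap_match th d v1 -> cap_match th d v2 -> joinable v1 v2.
Proof.
  intros HA d. induction d using term_nested_ind; intros v1 v2 H1 H2.
  - inversion H1; inversion H2; subst. eauto.
  - inversion H1 as [|f1 cs1 vs1 A1]; subst. inversion H2 as [|f2 cs2 vs2 A2]; subst.
    assert (Forall2 (fun a b => joinable a b) vs1 vs2).
    { clear H1 H2. revert vs1 vs2 A1 A2.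
      induction H; intros l1 l2 A1 A2; inversion A1; inversion A2; subst; constructor; eauto. }
    destruct (joinable_args H0) as [ws [W1 W2]].
    exists (Fun f ws). split; apply rsteps_args; auto.
Qed.

Lemma cap_match_rename th th' (rho : nat -> nat) c s :
  cap_match th c s -> (forall x, th' (rho x) = th x) ->
  cap_match th' (apply_subst (fun x => Var (rho x)) c) s.
Proof.
  revert s. induction c using term_nested_ind; intros s HG Hth; inversion HG; subst; simpl.
  - constructor. rewrite Hth. auto.
  - constructor. apply Forall2_map_l. clear HG.
    induction H3; inversion H; subst; constructor; auto.
Qed.

Lemma cap_term_rename (rho : nat -> nat) c :
  cap_term c -> cap_term (apply_subst (fun x => @Var F (rho x)) c).
Proof.
  intros H f Hf. apply in_funs_subst_inv in Hf as [Hf|[y [_ Hf]]]; auto. simpl in Hf. contradiction.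
Qed.

(* Decompositions of the arguments are put side by side by renaming the
   variables of the first into the even and those of the rest into the odd numbers. *)
Lemma cap_decomposition_args ts B : 1 <= B -> (forall s, In s ts -> term_size s <= B) ->
  Forall (fun s => exists c th, cap_match th c s /\ cap_term c /\
                     forall x, term_size (th x) <= term_size s) ts ->
  exists cs th, Forall2 (cap_match th) cs ts /\ Forall cap_term cs /\
                forall x, term_size (th x) <= B.
Proof.
  intros HB HS H. induction H as [|s0 ss' [c0 [th0 [HG0 [Hc0 Ht0]]]] Hr IH].
  - exists [], (@Var F). repeat split; simpl; auto.
  - destruct IH as [cs [th' [HG' [Hc' Ht']]]]. { intros; apply HS; simpl; auto. }
    exists (apply_subst (fun x => Var (2 * x)) c0 :: map (apply_subst (fun x => Var (2 * x + 1))) cs).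
    exists (fun y => if Nat.even y then th0 (Nat.div2 y) else th' (Nat.div2 y)).
    repeat split.
    + constructor.
      * eapply cap_match_rename; eauto. intros x. cbv beta.
        rewrite Nat.even_even, Nat.div2_double. auto.
      * apply Forall2_map_l. eapply Forall2_impl_in; [|exact HG']. intros a b _ Hab.
        eapply cap_match_rename; eauto. intros x. cbv beta.
        rewrite Nat.even_odd, Nat.div2_odd'. auto.
    + constructor. apply cap_term_rename; auto. apply Forall_map.
      eapply Forall_impl; [|exact Hc']. intros; apply cap_term_rename; auto.
    + intros x. destruct (Nat.even x); [|apply Ht'].
      pose proof (Ht0 (Nat.div2 x)). pose proof (HS s0 (or_introl eq_refl)). lia.
Qed.

Lemma cap_decomposition s : exists c th,
  cap_match th c s /\ cap_term c /\ forall x, term_size (th x) <= term_size s.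
Proof.
  induction s as [x|f ts IH] using term_nested_ind.
  - exists (Var 0), (fun _ => Var x). repeat split; simpl; auto.
    + constructor. left. eauto.
    + intros f [].
  - destruct (classic (fun_of C f)) as [Hf|Hf].
    + destruct (@cap_decomposition_args ts (term_size (Fun f ts))) as [cs [th [HG [Hc Ht]]]]; auto.
      { apply term_size_pos. }
      { intros s Hs. apply Nat.lt_le_incl. apply term_size_arg; auto. }
      exists (Fun f cs), th. repeat split; auto.
      * constructor; auto.
      * intros g [<-|Hg]; auto. apply in_flat_map in Hg as [c [Hc1 Hc2]].
        rewrite Forall_forall in Hc. eapply Hc; eauto.
    + exists (Var 0), (fun _ => Fun f ts). repeat split; auto.
      * constructor. right. exists f, ts, ts. repeat split; auto.
        clear. induction ts; constructor; auto. apply rt_refl.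
      * intros g [].
Qed.

Lemma cap_term_ctx_step t t' : ctx_step C t t' -> cap_term t -> cap_term t'.
Proof.
  induction 1 as [l r s HC|f ts1 t0 t0' ts2 Hst IH]; intros Hc g Hg.
  - apply in_funs_subst_inv in Hg as [Hg|[y [Hy Hg]]].
    + exists l, r. auto.
    + apply Hc. apply in_funs_subst_r with y; auto. apply (C_vars_incl HC); auto.
  - simpl in Hg. destruct Hg as [<-|Hg]. apply Hc. simpl; auto.
    assert (Hsub : forall g u, In g (funs u) -> In u (ts1 ++ t0 :: ts2) -> fun_of C g).
    { intros g' u Hu Hin. apply Hc. simpl. right. apply in_flat_map. eauto. }
    apply in_flat_map in Hg as [u [Hin Hu]].
    apply in_app_or in Hin as [Hin|[<-|Hin]].
    + apply (Hsub g u); auto. apply in_or_app; auto.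
    + apply IH; auto. intros g' Hg'. apply (Hsub g' t0 Hg'). apply in_or_app; simpl; auto.
    + apply (Hsub g u); auto. apply in_or_app; simpl; auto.
Qed.

Lemma cap_term_rsteps t t' : rsteps C t t' -> cap_term t -> cap_term t'.
Proof.
  intros Hs. apply rsteps_iff_ctx_steps in Hs. induction Hs; eauto using cap_term_ctx_step.
Qed.

Variable R : rule F -> Prop.
Hypothesis restrict_simulated : forall l r, restrict R C (l, r) -> rsteps C l r.

(* On terms built from Fun(C) only, every R-step uses a rule of R|_C. *)
Lemma cap_ctx_step_simulated t t' : ctx_step R t t' -> cap_term t -> rsteps C t t'.
Proof.
  induction 1 as [l r s HR|f ts1 t0 t0' ts2 Hst IH]; intros Hc.
  - apply rsteps_subst, restrict_simulated. split; auto.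
    intros g Hg. apply Hc. simpl. apply in_funs_subst_l; auto.
  - apply rsteps_arg, IH. intros g Hg. apply Hc. simpl. right. apply in_flat_map.
    exists t0. split; auto. apply in_or_app; simpl; auto.
Qed.

Lemma cap_rsteps_simulated t t' : rsteps R t t' -> cap_term t -> rsteps C t t'.
Proof.
  intros Hs. apply rsteps_iff_ctx_steps, clos_rt_rt1n_iff in Hs.
  induction Hs as [|x y z Hxy Hs IH]; intros Hc; [apply rt_refl|].
  pose proof (cap_ctx_step_simulated Hxy Hc) as H1.
  eapply rt_trans; eauto. apply IH. eapply cap_term_rsteps; eauto.
Qed.

Hypothesis C_sub_R : forall lr, C lr -> R lr.
Hypothesis R_confluent : confluent R.

Definition peak_joinable (s : term) :=
  forall t1 t2, rsteps C s t1 -> rsteps C s t2 -> joinable t1 t2.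

Lemma alien_reduct_joinable n : (forall s, term_size s <= n -> peak_joinable s) ->
  forall a a1 a2, term_size a <= S n -> alien_reduct a a1 -> alien_reduct a a2 -> joinable a1 a2.
Proof.
  intros IHn a a1 a2 Ha [[y [E1 E2]]|[h [ss [ts1 [E1 [E2 [_ E4]]]]]]]
                     [[y' [E1' E2']]|[h' [ss' [ts2 [E1' [E2' [_ E4']]]]]]];
    subst; try discriminate.
  - injection E1' as <-. exists (Var y). split; apply rt_refl.
  - injection E1' as <- <-.
    assert (Hsm : forall s, In s ss -> term_size s <= n).
    { intros s Hs. pose proof (@term_size_arg F h ss s Hs). lia. }
    assert (Forall2 joinable ts1 ts2).
    { clear -E4 E4' Hsm IHn. revert ts1 ts2 E4 E4'.
      induction ss as [|s0 ss IH]; intros l1 l2 A1 A2;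
        inversion A1; inversion A2; subst; constructor.
      - eapply IHn; eauto. apply Hsm; simpl; auto.
      - apply IH; auto. intros; apply Hsm; simpl; auto. }
    destruct (joinable_args H) as [ws [W1 W2]].
    exists (Fun h ws). split; apply rsteps_args; auto.
Qed.

Lemma peak_joinable_size n : forall s, term_size s <= n -> peak_joinable s.
Proof.
  induction n as [|n IHn]; intros s Hsz t1 t2 H1 H2; [pose proof (term_size_pos s); lia|].
  destruct (cap_decomposition s) as [c [th [HG [Hc Hth]]]].
  destruct (cap_match_rsteps_r HG H1) as [c1 [Hc1 HG1]].
  destruct (cap_match_rsteps_r HG H2) as [c2 [Hc2 HG2]].
  assert (HRc1 : rsteps R c c1) by (eapply rsteps_mono; eauto).
  assert (HRc2 : rsteps R c c2) by (eapply rsteps_mono; eauto).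
  destruct (R_confluent HRc1 HRc2) as [d [Hd1 Hd2]].
  apply cap_rsteps_simulated in Hd1; [|eapply cap_term_rsteps; eauto].
  apply cap_rsteps_simulated in Hd2; [|eapply cap_term_rsteps; eauto].
  destruct (cap_match_rsteps_l Hd1 HG1) as [v1 [Hv1 HGv1]].
  destruct (cap_match_rsteps_l Hd2 HG2) as [v2 [Hv2 HGv2]].
  destruct (cap_match_joinable (th := th)) with d v1 v2 as [w [Jw1 Jw2]]; auto.
  { intros x a1 a2. apply (alien_reduct_joinable IHn). specialize (Hth x). lia. }
  exists w. split; eapply rt_trans; eauto.
Qed.

Theorem confluent_of_confluent_super : confluent C.
Proof. intros s. exact (peak_joinable_size (le_n _)). Qed.

End Caps.

Section Positions.
Variable F : Type.
Notation term := (term F).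

Lemma subterm_at_vars p : forall (t s : term), subterm_at t p = Some s -> incl (vars s) (vars t).
Proof.
  induction p as [|i p IH]; simpl; intros t s H.
  - injection H as <-. apply incl_refl.
  - destruct t as [x|f ts]; try discriminate.
    destruct (nth_error ts i) as [u|] eqn:E; try discriminate.
    intros x Hx. simpl. apply in_flat_map. exists u. split.
    eapply nth_error_In; eauto. eapply IH; eauto.
Qed.

Lemma fun_pos_subt_vars (t : term) p : fun_pos t p -> incl (vars (subt t p)) (vars t).
Proof. intros [g [gs Hg]]. unfold subt. rewrite Hg. exact (subterm_at_vars p t Hg). Qed.

Lemma subterm_at_subst p : forall (t s : term) (sg : nat -> term), subterm_at t p = Some s ->
  subterm_at (apply_subst sg t) p = Some (apply_subst sg s).
Proof.
  induction p as [|i p IH]; simpl; intros t s sg H.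
  - injection H as <-. auto.
  - destruct t as [x|f ts]; try discriminate. simpl.
    destruct (nth_error ts i) as [u|] eqn:E; try discriminate.
    rewrite nth_error_map, E. simpl. auto.
Qed.

Lemma prefix_nil p : prefix [] p.
Proof. exists p. auto. Qed.

Lemma prefix_cons i j p q : prefix (i :: p) (j :: q) -> i = j /\ prefix p q.
Proof. intros [r E]. simpl in E. injection E as -> ->. split; auto. exists r; auto. Qed.

Lemma parallel_cons_same i p q : parallel p q -> parallel (i :: p) (i :: q).
Proof. intros [H1 H2]. split; intros H; apply prefix_cons in H; tauto. Qed.

Lemma parallel_cons_same_inv i p q : parallel (i :: p) (i :: q) -> parallel p q.
Proof.
  intros [H1 H2]. split; intros [r Hr]; [apply H1|apply H2]; exists r; simpl; congruence.
Qed.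

Lemma parallel_cons_diff i j p q : i <> j -> parallel (i :: p) (j :: q).
Proof. intros Hij. split; intros H; apply prefix_cons in H; destruct H; auto. Qed.

Lemma parallel_cons_S i j p q : parallel (i :: p) (j :: q) -> parallel (S i :: p) (S j :: q).
Proof.
  intros [H1 H2]. split; intros H; apply prefix_cons in H as [E [r Er]]; injection E as ->;
  [apply H1|apply H2]; exists r; simpl; congruence.
Qed.

Lemma nth_error_map_nth_same (g : term -> term) ts i :
  nth_error (Defs.map_nth g i ts) i = option_map g (nth_error ts i).
Proof. revert i; induction ts; intros [|i]; simpl; auto. Qed.

Lemma nth_error_map_nth_diff (g : term -> term) ts i j : i <> j ->
  nth_error (Defs.map_nth g i ts) j = nth_error ts j.
Proof. revert i j; induction ts; intros [|i] [|j] H; simpl; auto. congruence. Qed.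

Lemma map_map_nth (h g g' : term -> term) i ts :
  (forall a, nth_error ts i = Some a -> h (g a) = g' (h a)) ->
  map h (Defs.map_nth g i ts) = Defs.map_nth g' i (map h ts).
Proof.
  revert i; induction ts as [|a ts IH]; intros [|i] H; simpl in *; auto.
  - f_equal. apply H. auto.
  - f_equal. apply IH. auto.
Qed.

Lemma subterm_at_replace_parallel p : forall (t v : term) q,
  subterm_at t p <> None -> subterm_at t q <> None -> parallel p q ->
  subterm_at (replace_at t p v) q <> None.
Proof.
  induction p as [|i p IH]; intros t v q Hp Hq Hpq.
  - exfalso. apply (proj1 Hpq). apply prefix_nil.
  - destruct q as [|j q]. exfalso. apply (proj2 Hpq). apply prefix_nil.
    destruct t as [x|f ts]; [simpl in Hp; congruence|]. simpl in *.
    destruct (Nat.eq_dec i j) as [<-|Hij].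
    + rewrite nth_error_map_nth_same. destruct (nth_error ts i) as [u|]; [|congruence]. simpl.
      apply IH; auto. eapply parallel_cons_same_inv; eauto.
    + rewrite nth_error_map_nth_diff; auto.
Qed.

Lemma subst_replace_at p : forall (t v : term) (d : nat -> term), subterm_at t p <> None ->
  apply_subst d (replace_at t p v) = replace_at (apply_subst d t) p (apply_subst d v).
Proof.
  induction p as [|i p IH]; intros t v d Hp.
  - rewrite !replace_at_nil. auto.
  - destruct t as [x|f ts]; [simpl in Hp; congruence|]. simpl in *. f_equal.
    apply map_map_nth. intros a Ha. rewrite Ha in Hp. apply IH. auto.
Qed.

Definition replace_all (t : term) (ps : list (pos * term)) :=
  fold_left (fun acc pv => replace_at acc (fst pv) (snd pv)) ps t.

Lemma subst_replace_all (ps : list (pos * term)) : forall (t : term) (d : nat -> term),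
  (forall pv, In pv ps -> subterm_at t (fst pv) <> None) ->
  ForallOrdPairs (fun a b => parallel (fst a) (fst b)) ps ->
  apply_subst d (replace_all t ps) =
  replace_all (apply_subst d t) (map (fun pv => (fst pv, apply_subst d (snd pv))) ps).
Proof.
  induction ps as [|[p v] ps IH]; intros t d Hv Hfop; simpl; auto.
  inversion Hfop as [|a l Hp Hps]; subst. unfold replace_all in *. simpl. rewrite IH; auto.
  - rewrite subst_replace_at; auto. apply (Hv (p, v)); simpl; auto.
  - intros pv Hpv. apply subterm_at_replace_parallel.
    + apply (Hv (p, v)); simpl; auto.
    + apply Hv; simpl; auto.
    + rewrite Forall_forall in Hp. apply (Hp pv Hpv).
Qed.

End Positions.

Section ParallelDecomposition.
Variable F : Type.
Notation term := (term F).
Implicit Types A : rule F -> Prop.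

Record redex := mk_redex { rpos : pos; rrule : rule F; rsubst : nat -> term }.

Definition contractum (r : redex) : term := apply_subst (rsubst r) (snd (rrule r)).

Definition contract (t : term) (rs : list redex) : term :=
  fold_left (fun acc r => replace_at acc (rpos r) (contractum r)) rs t.

Definition redex_in (l : term) (s s2 : nat -> term) (r : redex) : Prop :=
  fun_pos l (rpos r) /\
  apply_subst (rsubst r) (fst (rrule r)) = apply_subst s (subt l (rpos r)) /\
  (forall x, In x (vars (subt l (rpos r))) -> s2 x = s x).

Definition redex_of A (l : term) (s s2 : nat -> term) (r : redex) : Prop :=
  A (rrule r) /\ redex_in l s s2 r.

(* A parallel step [l s ⇉ u] split into the redexes [rs] contracted at
   (pairwise parallel) function positions of [l], and steps [s ⇉ s2] below the
   variables of [l] that are not under one of these positions.  The permutation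
   says that distinct redexes cover disjoint occurrences of variables of [l]. *)
Record par_decomp A (l : term) (s : nat -> term) (u : term) (rs : list redex)
    (s2 : nat -> term) : Prop := {
  pd_subst : forall x, In x (vars l) -> par A (s x) (s2 x);
  pd_redexes : Forall (redex_of A l s s2) rs;
  pd_parallel : ForallOrdPairs (fun a b => parallel (rpos a) (rpos b)) rs;
  pd_vars : exists rest, Permutation (vars l) (flat_map (fun r => vars (subt l (rpos r))) rs ++ rest);
  pd_result : u = contract (apply_subst s2 l) rs }.

Lemma contract_app t rs1 rs2 : contract t (rs1 ++ rs2) = contract (contract t rs1) rs2.
Proof. apply fold_left_app. Qed.

Definition shift0 (r : redex) : redex := mk_redex (0 :: rpos r) (rrule r) (rsubst r).

Definition pos_bump (p : pos) : pos := match p with [] => [] | i :: q => S i :: q end.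

Definition shiftS (r : redex) : redex := mk_redex (pos_bump (rpos r)) (rrule r) (rsubst r).

Lemma contract_shift0 f rs : forall (a : term) args,
  contract (Fun f (a :: args)) (map shift0 rs) = Fun f (contract a rs :: args).
Proof. induction rs as [|r rs IH]; intros a args; simpl; auto. Qed.

Lemma contract_shiftS f rs : Forall (fun r => rpos r <> []) rs -> forall args (b : term),
  exists cs, contract (Fun f args) rs = Fun f cs /\
             contract (Fun f (b :: args)) (map shiftS rs) = Fun f (b :: cs).
Proof.
  induction 1 as [|[[|i p] rl th] rs Hr _ IH]; intros args b; simpl in *.
  - exists args. auto.
  - congruence.
  - apply IH.
Qed.

Lemma subterm_at_shiftS f (b : term) args p : p <> [] ->
  subterm_at (Fun f (b :: args)) (pos_bump p) = subterm_at (Fun f args) p.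
Proof. destruct p; [congruence|reflexivity]. Qed.

Lemma parallel_shiftS p q : p <> [] -> q <> [] -> parallel p q ->
  parallel (pos_bump p) (pos_bump q).
Proof. destruct p, q; try congruence. intros _ _. apply parallel_cons_S. Qed.

Lemma par_decomp_nil A f (s : nat -> term) :
  par_decomp A (Fun f []) s (Fun f []) [] s.
Proof. split; simpl; try constructor; try tauto. exists []. constructor. Qed.

Section Cons.
Variables (A : rule F -> Prop) (f : F) (s s0 sR : nat -> term) (l0 u0 : term).
Variables (ls us : list term) (rs0 rsR : list redex).
Hypothesis Hnd : NoDup (vars l0 ++ flat_map vars ls).
Hypothesis D0 : par_decomp A l0 s u0 rs0 s0.
Hypothesis DR : par_decomp A (Fun f ls) s (Fun f us) rsR sR.
Hypothesis rsR_below_root : Forall (fun r => rpos r <> []) rsR.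

Let s2 x := if in_dec Nat.eq_dec x (vars l0) then s0 x else sR x.
Let L := Fun f (l0 :: ls).

Lemma glue_l0 x : In x (vars l0) -> s2 x = s0 x.
Proof. intros Hx. unfold s2. destruct (in_dec Nat.eq_dec x (vars l0)); tauto. Qed.

Lemma glue_ls x : In x (flat_map vars ls) -> s2 x = sR x.
Proof.
  intros Hx. unfold s2. destruct (in_dec Nat.eq_dec x (vars l0)); auto.
  exfalso. eapply NoDup_app_disjoint; eauto.
Qed.

Lemma shift0_sound r : In r rs0 ->
  subt L (rpos (shift0 r)) = subt l0 (rpos r) /\ fun_pos L (rpos (shift0 r)).
Proof.
  intros Hr. pose proof (pd_redexes D0) as Hall. rewrite Forall_forall in Hall.
  destruct (Hall r Hr) as [_ [[g [gs Hg]] _]].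
  split; [unfold subt; simpl; rewrite Hg; reflexivity|exists g, gs; exact Hg].
Qed.

Lemma shiftS_sound r : In r rsR ->
  subt L (rpos (shiftS r)) = subt (Fun f ls) (rpos r) /\ fun_pos L (rpos (shiftS r)).
Proof.
  intros Hr. pose proof (pd_redexes DR) as Hall. pose proof rsR_below_root as NE.
  rewrite Forall_forall in Hall, NE. destruct (Hall r Hr) as [_ [[g [gs Hg]] _]].
  pose proof (subterm_at_shiftS f l0 ls (NE r Hr)) as HH.
  change (rpos (shiftS r)) with (pos_bump (rpos r)). unfold L.
  split; [unfold subt; rewrite HH, Hg; reflexivity|exists g, gs; rewrite HH; exact Hg].
Qed.

Lemma par_decomp_cons :
  par_decomp A L s (Fun f (u0 :: us)) (map shift0 rs0 ++ map shiftS rsR) s2.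
Proof.
  destruct D0 as [D1 D2 D3 [r0 D4] D5], DR as [E1 E2 E3 [rR E4] E5].
  split.
  - intros x Hx. simpl in Hx. apply in_app_or in Hx as [Hx|Hx].
    + rewrite glue_l0; auto.
    + rewrite glue_ls; auto.
  - apply Forall_app. split; apply Forall_map; rewrite Forall_forall in D2, E2 |- *; intros r Hr.
    + destruct (shift0_sound r Hr) as [V1 V2]. destruct (D2 r Hr) as [Q1 [Q2 [Q3 Q4]]].
      unfold redex_of, redex_in. cbn [rpos rrule rsubst shift0] in V1, V2 |- *. rewrite V1.
      repeat split; auto. intros x Hx. rewrite glue_l0; auto. exact (fun_pos_subt_vars Q2 _ Hx).
    + destruct (shiftS_sound r Hr) as [V1 V2]. destruct (E2 r Hr) as [Q1 [Q2 [Q3 Q4]]].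
      unfold redex_of, redex_in. cbn [rpos rrule rsubst shiftS] in V1, V2 |- *. rewrite V1.
      repeat split; auto. intros x Hx. rewrite glue_ls; auto. exact (fun_pos_subt_vars Q2 _ Hx).
  - pose proof rsR_below_root as NE. rewrite Forall_forall in NE. apply FOP_app.
    + eapply FOP_map_in; eauto. intros a b _ _ H. apply parallel_cons_same; auto.
    + eapply FOP_map_in; eauto. intros a b Ha Hb H. apply parallel_shiftS; auto.
    + intros a b Ha Hb. apply in_map_iff in Ha as [a' [<- _]]. apply in_map_iff in Hb as [b' [<- Hb]].
      specialize (NE b' Hb). cbn [rpos shift0 shiftS]. destruct (rpos b') as [|j q]; [congruence|].
      apply parallel_cons_diff. auto.
  - exists (r0 ++ rR). rewrite flat_map_app.
    rewrite (@flat_map_map_ext _ _ _ (fun r => vars (subt L (rpos r))) shift0 (fun r => vars (subt l0 (rpos r)))).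
    2:{ rewrite Forall_forall. intros r Hr. rewrite (proj1 (shift0_sound r Hr)). auto. }
    rewrite (@flat_map_map_ext _ _ _ (fun r => vars (subt L (rpos r))) shiftS (fun r => vars (subt (Fun f ls) (rpos r)))).
    2:{ rewrite Forall_forall. intros r Hr. rewrite (proj1 (shiftS_sound r Hr)). auto. }
    unfold L. simpl. simpl in E4.
    eapply perm_trans. apply Permutation_app; [exact D4|exact E4].
    rewrite <- !app_assoc. apply Permutation_app_head.
    rewrite !app_assoc. apply Permutation_app_tail. apply Permutation_app_comm.
  - rewrite contract_app. unfold L. simpl apply_subst. rewrite contract_shift0.
    destruct (contract_shiftS f rsR_below_root (map (apply_subst s2) ls) (contract (apply_subst s2 l0) rs0))
      as [cs [C1 C2]].
    rewrite C2. f_equal. f_equal.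
    + rewrite D5. f_equal. apply subst_ext_in. intros; symmetry; apply glue_l0; auto.
    + enough (Fun f us = Fun f cs) by congruence.
      rewrite E5, <- C1. f_equal. simpl. f_equal. apply map_ext_in.
      intros a Ha. apply subst_ext_in. intros x Hx. symmetry. apply glue_ls. apply in_flat_map; eauto.
Qed.

End Cons.

Lemma par_decomp_args A f (s : nat -> term) ls us :
  Forall2 (fun l u => NoDup (vars l) -> exists rs s2, par_decomp A l s u rs s2) ls us ->
  NoDup (flat_map vars ls) ->
  exists rs s2, par_decomp A (Fun f ls) s (Fun f us) rs s2 /\ Forall (fun r => rpos r <> []) rs.
Proof.
  induction 1 as [|l0 u0 ls us H0 HR IH]; intros Hnd.
  - exists [], s. split; [apply par_decomp_nil|constructor].
  - simpl in Hnd.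
    destruct (H0 (NoDup_app_remove_r _ _ Hnd)) as [rs0 [s0 D0]].
    destruct (IH (NoDup_app_remove_l _ _ Hnd)) as [rsR [sR [DR NE]]].
    eexists _, _. split; [exact (par_decomp_cons Hnd D0 DR NE)|].
    apply Forall_app. split; apply Forall_map.
    + apply Forall_forall. intros r _. discriminate.
    + eapply Forall_impl; [|exact NE]. intros [[|i p] rl th]; simpl; congruence.
Qed.

Lemma par_decomp_exists A l : NoDup (vars l) -> forall (s : nat -> term) u,
  par A (apply_subst s l) u -> exists rs s2, par_decomp A l s u rs s2.
Proof.
  induction l as [x|f ls IH] using term_nested_ind; intros Hnd s u Hp.
  - exists [], (fun y => if Nat.eq_dec y x then u else s y).
    split; try constructor.
    + intros y [E|[]]; subst y. simpl. destruct (Nat.eq_dec x x); [auto|congruence].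
    + exists [x]. apply Permutation_refl.
    + simpl. destruct (Nat.eq_dec x x); congruence.
  - simpl in Hp. inversion Hp as [|f' ss us HF E1 E2|lp rp th HA E1 E2]; subst.
    + apply (proj1 (@Forall2_map_l _ _ _ _ (apply_subst s) ls us)) in HF.
      destruct (@par_decomp_args A f s ls us) as [rs [s2 [D _]]]; eauto.
      eapply Forall2_impl_in; [|exact (Forall_Forall2 IH HF)]. intros a b Ha [IHa Hab] Hnda. auto.
    + exists [mk_redex [] (lp, rp) th], s. split.
      * intros; apply par_refl.
      * constructor; [|constructor]. unfold redex_of, redex_in, subt; simpl.
        repeat split; auto. exists f, ls; reflexivity.
      * repeat constructor.
      * exists []. unfold subt. simpl. rewrite !app_nil_r. apply Permutation_refl.
      * unfold contract, contractum. simpl. congruence.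
Qed.

End ParallelDecomposition.

(* For linear, pairwise variable-disjoint equations, naive decomposition never
   binds a variable twice nor inside a bound term, so its binding list is
   already a most general unifier whenever a unifier exists. *)
Section LinearUnification.
Variable F : Type.
Notation term := (term F).

Fixpoint bindings (a b : term) : list (nat * term) :=
  match a with
  | Var x => [(x, b)]
  | Fun f as_ =>
    match b with
    | Var y => [(y, a)]
    | Fun g bs =>
      (fix go (xs ys : list term) : list (nat * term) :=
         match xs, ys with
         | x :: xs', y :: ys' => bindings x y ++ go xs' ys'
         | _, _ => []
         end) as_ bs
    end
  end.

Lemma bindings_Fun f g as_ bs :
  bindings (Fun f as_) (Fun g bs) =
  concat (map (fun p => bindings (fst p) (snd p)) (combine as_ bs)).
Proof.
  simpl. revert bs. induction as_ as [|a as_ IH]; intros [|b bs]; simpl; auto. f_equal. apply IH.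
Qed.

Definition keys (L : list (nat * term)) := map fst L.
Definition vals (L : list (nat * term)) := flat_map (fun kv => vars (snd kv)) L.

Lemma unifier_bindings (tau : nat -> term) a : forall b, apply_subst tau a = apply_subst tau b ->
  forall x t, In (x, t) (bindings a b) -> tau x = apply_subst tau t.
Proof.
  induction a as [y|f as_ IH] using term_nested_ind; intros b E x t Hin.
  - simpl in Hin. destruct Hin as [Hin|[]]. injection Hin as -> ->. auto.
  - destruct b as [y|g bs].
    + simpl in Hin. destruct Hin as [Hin|[]]. injection Hin as -> <-. auto.
    + rewrite bindings_Fun in Hin. simpl in E. injection E as -> E.
      revert bs E Hin. induction IH as [|a as_ Ha Has IH2]; intros [|b bs] E Hin; simpl in *; try contradiction.
      injection E as E1 E2. apply in_app_or in Hin as [Hin|Hin]; eauto.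
Qed.

Lemma bindings_linear a : forall b, NoDup (vars a ++ vars b) ->
  NoDup (keys (bindings a b) ++ vals (bindings a b)) /\
  incl (keys (bindings a b) ++ vals (bindings a b)) (vars a ++ vars b).
Proof.
  induction a as [y|f as_ IH] using term_nested_ind; intros b Hnd.
  - unfold keys, vals. simpl. rewrite app_nil_r. split; auto. apply incl_refl.
  - destruct b as [y|g bs].
    + unfold keys, vals. simpl. rewrite app_nil_r. split.
      * apply Permutation_NoDup with (flat_map vars as_ ++ [y]); auto.
        apply Permutation_sym, Permutation_cons_append.
      * intros z [<-|Hz]; apply in_or_app; simpl; auto.
    + rewrite bindings_Fun. simpl vars in *.
      revert bs Hnd. induction IH as [|a as_ Ha Has IH2]; intros [|b bs] Hnd; simpl in *;
        try (split; [constructor|intros z []]).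
      assert (P : Permutation ((vars a ++ flat_map vars as_) ++ vars b ++ flat_map vars bs)
                              ((vars a ++ vars b) ++ (flat_map vars as_ ++ flat_map vars bs))).
      { rewrite <- !app_assoc. apply Permutation_app_head. rewrite !app_assoc.
        apply Permutation_app_tail. apply Permutation_app_comm. }
      pose proof (Permutation_NoDup P Hnd) as Hnd'.
      destruct (Ha b (NoDup_app_remove_r _ _ Hnd')) as [K1 I1].
      destruct (IH2 bs (NoDup_app_remove_l _ _ Hnd')) as [K2 I2].
      set (L1 := bindings a b) in *.
      set (L2 := concat (map (fun p => bindings (fst p) (snd p)) (combine as_ bs))) in *.
      assert (Q : Permutation (keys (L1 ++ L2) ++ vals (L1 ++ L2))
                              ((keys L1 ++ vals L1) ++ (keys L2 ++ vals L2))).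
      { unfold keys, vals. rewrite map_app, flat_map_app. rewrite <- !app_assoc.
        apply Permutation_app_head. rewrite !app_assoc. apply Permutation_app_tail.
        apply Permutation_app_comm. }
      split.
      * eapply Permutation_NoDup. apply Permutation_sym, Q.
        eapply NoDup_app_incl; [exact Hnd'|exact K1|exact K2|exact I1|exact I2].
      * intros z Hz. apply (Permutation_in _ Q) in Hz. apply (Permutation_in _ (Permutation_sym P)).
        apply in_app_or in Hz as [Hz|Hz]; apply in_or_app; auto.
Qed.

Lemma bindings_unify a : forall b, (exists tau : nat -> term, apply_subst tau a = apply_subst tau b) ->
  forall mu : nat -> term, (forall x t, In (x, t) (bindings a b) -> mu x = t) ->
  (forall x t, In (x, t) (bindings a b) -> forall y, In y (vars t) -> mu y = Var y) ->
  apply_subst mu a = apply_subst mu b.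
Proof.
  induction a as [y|f as_ IH] using term_nested_ind; intros b [tau E] mu H1 H2.
  - simpl. rewrite (H1 y b) by (simpl; auto). symmetry. apply subst_id_on.
    intros; eapply H2; simpl; eauto.
  - destruct b as [y|g bs].
    + simpl apply_subst at 2. rewrite (H1 y (Fun f as_)) by (simpl; auto). apply subst_id_on.
      intros; eapply H2; simpl; eauto.
    + simpl in E. injection E as <- E. simpl. f_equal.
      rewrite bindings_Fun in H1, H2.
      revert bs E H1 H2. induction IH as [|a as_ Ha Has IH2]; intros [|b bs] E H1 H2;
        simpl in *; try discriminate; auto.
      injection E as E1 E2. f_equal.
      * apply Ha; [exists tau; exact E1| |].
        -- intros x t Hxt. apply H1. apply in_or_app; left; exact Hxt.
        -- intros x t Hxt y Hy. eapply H2; [apply in_or_app; left; exact Hxt|exact Hy].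
      * apply IH2; auto.
        -- intros x t Hxt. apply H1. apply in_or_app; right; exact Hxt.
        -- intros x t Hxt y Hy. eapply H2; [apply in_or_app; right; exact Hxt|exact Hy].
Qed.

Definition all_bindings (E : list (term * term)) := flat_map (fun e => bindings (fst e) (snd e)) E.

Definition linear_mgu (E : list (term * term)) : nat -> term := fun x =>
  match find (fun kv => Nat.eqb (fst kv) x) (all_bindings E) with
  | Some kv => snd kv
  | None => Var x
  end.

Lemma find_key (B : list (nat * term)) x t : NoDup (map fst B) -> In (x, t) B ->
  find (fun kv => Nat.eqb (fst kv) x) B = Some (x, t).
Proof.
  induction B as [|[y u] B IH]; simpl; intros Hnd Hin; [contradiction|].
  inversion Hnd; subst. destruct Hin as [Hin|Hin].
  - injection Hin as -> ->. rewrite Nat.eqb_refl. auto.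
  - destruct (Nat.eqb_spec y x); subst; auto.
    exfalso. apply H1. apply in_map_iff. exists (x, t). auto.
Qed.

Lemma find_no_key (B : list (nat * term)) x : ~ In x (map fst B) ->
  find (fun kv => Nat.eqb (fst kv) x) B = None.
Proof.
  induction B as [|[y u] B IH]; simpl; intros Hn; auto.
  destruct (Nat.eqb_spec y x); subst. exfalso; auto. apply IH. auto.
Qed.

Lemma all_bindings_linear (E : list (term * term)) :
  NoDup (flat_map (fun e => vars (fst e) ++ vars (snd e)) E) ->
  NoDup (keys (all_bindings E) ++ vals (all_bindings E)).
Proof.
  intros Hnd.
  assert (H1 : NoDup (flat_map (fun e => keys (bindings (fst e) (snd e)) ++
                                         vals (bindings (fst e) (snd e))) E)).
  { eapply NoDup_flat_map_incl; eauto. intros e He. apply bindings_linear; auto. }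
  eapply Permutation_NoDup; [|exact H1].
  replace (keys (all_bindings E)) with (flat_map (fun e => keys (bindings (fst e) (snd e))) E)
    by (clear; unfold all_bindings, keys; induction E; simpl; auto; rewrite map_app; congruence).
  replace (vals (all_bindings E)) with (flat_map (fun e => vals (bindings (fst e) (snd e))) E)
    by (clear; unfold all_bindings, vals; induction E; simpl; auto; rewrite flat_map_app; congruence).
  apply (flat_map_app_perm (fun e : term * term => keys (bindings (fst e) (snd e)))).
Qed.

Theorem linear_mgu_is_mgu (E : list (term * term)) :
  NoDup (flat_map (fun e => vars (fst e) ++ vars (snd e)) E) ->
  (exists tau, unifies tau E) -> is_mgu (linear_mgu E) E.
Proof.
  intros Hnd [tau Htau].
  set (B := all_bindings E).
  pose proof (all_bindings_linear E Hnd) as NB. fold B in NB.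
  assert (Hin : forall x t, In (x, t) B -> linear_mgu E x = t).
  { intros x t H. unfold linear_mgu. fold B.
    rewrite (@find_key B x t (NoDup_app_remove_r _ _ NB) H). auto. }
  assert (Hout : forall x, ~ In x (keys B) -> linear_mgu E x = Var x).
  { intros x H. unfold linear_mgu. fold B. rewrite find_no_key; auto. }
  split.
  - intros a b Hab. apply bindings_unify with (b := b).
    + exists tau. apply Htau; auto.
    + intros x t H. apply Hin. unfold B, all_bindings. apply in_flat_map. exists (a, b). auto.
    + intros x t H y Hy. apply Hout. intros Hk. eapply NoDup_app_disjoint; eauto.
      unfold vals. apply in_flat_map. exists (x, t). split; auto.
      unfold B, all_bindings. apply in_flat_map. exists (a, b). auto.
  - intros tau' Htau'. exists tau'. intros x.
    destruct (in_dec Nat.eq_dec x (keys B)) as [Hk|Hk]; [|rewrite Hout; auto].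
    unfold keys in Hk. apply in_map_iff in Hk as [[y t] [Ey Hy]]. simpl in Ey. subst y.
    rewrite (Hin x t Hy). unfold B, all_bindings in Hy. apply in_flat_map in Hy as [[a b] [Hab Hy]].
    exact (@unifier_bindings tau' a b (Htau' a b Hab) x t Hy).
Qed.

End LinearUnification.

Section RenamingApart.

Definition swap_blocks (N k x : nat) : nat :=
  if x <? N then x + k * N else if (k * N <=? x) && (x <? k * N + N) then x - k * N else x.

Lemma swap_blocks_involutive N k x : swap_blocks N k (swap_blocks N k x) = x.
Proof.
  unfold swap_blocks. assert (HM : k * N = 0 \/ N <= k * N) by (destruct k; [left; lia|right; nia]).
  remember (k * N) as M. clear HeqM.
  destruct (Nat.ltb_spec x N).
  - destruct (Nat.ltb_spec (x + M) N); [lia|].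
    destruct (Nat.leb_spec M (x + M)); [|lia].
    destruct (Nat.ltb_spec (x + M) (M + N)); simpl; lia.
  - destruct (Nat.leb_spec M x); destruct (Nat.ltb_spec x (M + N)); simpl.
    + destruct (Nat.ltb_spec (x - M) N); [lia|]. exfalso; lia.
    + destruct (Nat.ltb_spec x N); [lia|]. destruct (Nat.leb_spec M x); [|lia].
      destruct (Nat.ltb_spec x (M + N)); simpl; lia.
    + destruct (Nat.ltb_spec x N); [lia|]. destruct (Nat.leb_spec M x); [lia|]. simpl; lia.
    + destruct (Nat.ltb_spec x N); [lia|]. destruct (Nat.leb_spec M x); [lia|]. simpl; lia.
Qed.

Lemma swap_blocks_low N k x : x < N -> swap_blocks N k x = x + k * N.
Proof. intros H. unfold swap_blocks. destruct (Nat.ltb_spec x N); lia. Qed.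

Lemma swap_blocks_renaming N k : renaming (swap_blocks N k).
Proof. exists (swap_blocks N k). split; intros; apply swap_blocks_involutive. Qed.

Variable F : Type.
Notation term := (term F).

Definition rename_rule (rho : nat -> nat) (rl : rule F) : rule F :=
  (apply_subst (fun x => Var (rho x)) (fst rl), apply_subst (fun x => Var (rho x)) (snd rl)).

Lemma rule_vars_rename rho rl : rule_vars (rename_rule rho rl) = map rho (rule_vars rl).
Proof. unfold rule_vars, rename_rule. simpl. rewrite !vars_rename, map_app. auto. Qed.

Lemma in_vars_rename_swap N k (t : term) y : (forall x, In x (vars t) -> x < N) ->
  In y (vars (apply_subst (fun x => Var (swap_blocks N k x)) t)) -> k * N <= y < k * N + N.
Proof.
  intros Ht Hy. rewrite vars_rename in Hy. apply in_map_iff in Hy as [x [<- Hx]].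
  specialize (Ht x Hx). rewrite swap_blocks_low; lia.
Qed.

Lemma subst_rename_inv (rho rho' : nat -> nat) (th : nat -> term) t :
  (forall x, rho' (rho x) = x) ->
  apply_subst (fun y => th (rho' y)) (apply_subst (fun x => Var (rho x)) t) = apply_subst th t.
Proof. intros H. rewrite subst_subst. apply subst_ext_in. intros x _. simpl. rewrite H. auto. Qed.

Lemma variant_contractum (l r l' r' : term) (th s : nat -> term) :
  incl (vars r) (vars l) -> variant (l', r') (l, r) ->
  apply_subst th l' = apply_subst s l -> apply_subst th r' = apply_subst s r.
Proof.
  intros Hlr [rho [_ [Hl Hr]]] E. simpl in Hl, Hr. subst l' r'.
  rewrite subst_subst in *. apply subst_ext_in. intros x Hx.
  exact (subst_eq_on_vars _ _ _ E x (Hlr x Hx)).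
Qed.

End RenamingApart.

Section ParallelCriticalPairs.
Variable F : Type.
Notation term := (term F).
Variable R C : rule F -> Prop.
Hypothesis R_left_linear : left_linear R.
Hypothesis R_TRS : TRS R.
Hypothesis pcp_conv : forall t u, pcp R t u -> conv C t u.

(* Used with [k = 1]: the rule of the [j]-th redex is renamed into the variable
   block [[(j+1) N, (j+2) N)], apart from the overlapped rule, whose variables
   are below [N]. *)
Fixpoint pcp_steps (N k : nat) (rs : list (redex F)) : list (pos * rule F) :=
  match rs with
  | [] => []
  | r0 :: rs' => (rpos r0, rename_rule (swap_blocks N k) (rrule r0)) :: pcp_steps N (S k) rs'
  end.

Fixpoint glue_blocks (N k : nat) (rs : list (redex F)) (d : nat -> term) (x : nat) : term :=
  match rs with
  | [] => d x
  | r0 :: rs' => if (k * N <=? x) && (x <? k * N + N) then rsubst r0 (x - k * N)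
                 else glue_blocks N (S k) rs' d x
  end.

Definition pcp_equation (l : term) (pr : pos * rule F) : term * term :=
  (fst (snd pr), subt l (fst pr)).

Lemma glue_blocks_low N k rs d x : 1 <= k -> x < N -> glue_blocks N k rs d x = d x.
Proof.
  revert k; induction rs as [|r0 rs IH]; intros k Hk Hx; simpl; auto.
  destruct (Nat.leb_spec (k * N) x); simpl. nia. apply IH; lia.
Qed.

Lemma glue_blocks_block N k rs d j r0 x : x < N -> nth_error rs j = Some r0 ->
  glue_blocks N k rs d (x + (k + j) * N) = rsubst r0 x.
Proof.
  revert k j; induction rs as [|r1 rs IH]; intros k j Hx Hj; [destruct j; discriminate|].
  simpl. destruct j as [|j].
  - simpl in Hj. injection Hj as ->. rewrite Nat.add_0_r.
    destruct (Nat.leb_spec (k * N) (x + k * N)); [|lia].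
    destruct (Nat.ltb_spec (x + k * N) (k * N + N)); [|lia]. simpl. f_equal. lia.
  - simpl in Hj. destruct (Nat.leb_spec (k * N) (x + (k + S j) * N)); simpl.
    + destruct (Nat.ltb_spec (x + (k + S j) * N) (k * N + N)); [nia|].
      replace (k + S j) with (S k + j) by lia. apply IH; auto.
    + replace (k + S j) with (S k + j) by lia. apply IH; auto.
Qed.

Lemma pcp_steps_pos N k rs : map fst (pcp_steps N k rs) = map (@rpos F) rs.
Proof. revert k; induction rs; intros k; simpl; f_equal; auto. Qed.

Lemma pcp_steps_var_disjoint N k rs : 1 <= k ->
  (forall r0, In r0 rs -> forall x, In x (rule_vars (rrule r0)) -> x < N) ->
  Forall (fun rl => forall x, In x (rule_vars rl) -> k * N <= x) (map snd (pcp_steps N k rs)) /\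
  ForallOrdPairs var_disjoint (map snd (pcp_steps N k rs)).
Proof.
  revert k; induction rs as [|r0 rs IH]; intros k Hk HN; simpl; [split; constructor|].
  destruct (IH (S k)) as [IH1 IH2]; [lia|intros r1 Hr1 x Hx; apply (HN r1); simpl; auto|].
  assert (Hh : forall x, In x (rule_vars (rename_rule (swap_blocks N k) (rrule r0))) ->
                         k * N <= x < k * N + N).
  { intros x Hx. rewrite rule_vars_rename in Hx. apply in_map_iff in Hx as [y [<- Hy]].
    pose proof (HN r0 (or_introl eq_refl) y Hy). rewrite swap_blocks_low; lia. }
  split.
  - constructor. intros x Hx. apply Hh in Hx. lia.
    eapply Forall_impl; [|exact IH1]. intros rl H x Hx. apply H in Hx. nia.
  - constructor; auto. eapply Forall_impl; [|exact IH1]. intros rl H x Hx1 Hx2.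
    apply Hh in Hx1. apply H in Hx2. nia.
Qed.

Lemma glue_solves_pcp_equations (l : term) N (tau s s2 : nat -> term) (rs : list (redex F)) :
  forall k, 1 <= k ->
  (forall r0, In r0 rs -> forall x, In x (rule_vars (rrule r0)) -> x < N) ->
  (forall x, In x (vars l) -> x < N) ->
  Forall (redex_in l s s2) rs ->
  (forall x, x < N -> tau x = s2 x) ->
  (forall j r0 x, nth_error rs j = Some r0 -> x < N -> tau (x + (k + j) * N) = rsubst r0 x) ->
  unifies tau (map (pcp_equation l) (pcp_steps N k rs)) /\
  map (fun pr : pos * rule F => (fst pr, apply_subst tau (snd (snd pr)))) (pcp_steps N k rs) =
  map (fun r0 => (rpos r0, contractum r0)) rs.
Proof.
  induction rs as [|r0 rs IH]; intros k Hk HN Hl HF Ht1 Ht2; simpl.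
  - split; auto. intros a b [].
  - inversion HF as [|x y [Hfp [He Hag]] HF']; subst.
    assert (Hren : forall t, (forall x, In x (vars t) -> x < N) ->
       apply_subst tau (apply_subst (fun x => Var (swap_blocks N k x)) t) = apply_subst (rsubst r0) t).
    { intros t Ht. rewrite subst_subst. apply subst_ext_in. intros x Hx. simpl.
      rewrite swap_blocks_low by (apply Ht; auto). specialize (Ht2 0 r0 x eq_refl (Ht x Hx)).
      rewrite Nat.add_0_r in Ht2. auto. }
    destruct (rrule r0) as [lp rp] eqn:Esr.
    assert (Hlr : forall x, In x (vars lp) \/ In x (vars rp) -> x < N).
    { intros x Hx. apply (HN r0); simpl; auto. rewrite Esr. apply in_or_app; auto. }
    destruct (IH (S k)) as [IH1 IH2]; auto; try lia.
    { intros; eapply HN; simpl; eauto. }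
    { intros j r1 x Hj Hx. replace (S k + j) with (k + S j) by lia. apply Ht2; auto. }
    split.
    + intros a b [Hab|Hab]; [|apply IH1; auto].
      unfold pcp_equation in Hab. simpl in Hab. injection Hab as <- <-.
      rewrite Hren by auto. simpl in He. rewrite He.
      apply subst_ext_in. intros x Hx. rewrite Ht1; [apply eq_sym, Hag; auto|].
      apply Hl. exact (fun_pos_subt_vars Hfp _ Hx).
    + f_equal; auto. unfold contractum. rewrite Esr. simpl. f_equal. apply Hren. auto.
Qed.

Lemma pcp_equations_linear (l : term) N (rs : list (redex F)) : forall k, 1 <= k ->
  (forall r0, In r0 rs -> NoDup (vars (fst (rrule r0)))) ->
  (forall r0, In r0 rs -> forall x, In x (rule_vars (rrule r0)) -> x < N) ->
  (forall x, In x (vars l) -> x < N) ->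
  Forall (fun r0 => fun_pos l (rpos r0)) rs ->
  NoDup (flat_map (fun r0 => vars (subt l (rpos r0))) rs) ->
  NoDup (flat_map (fun e => vars (fst e) ++ vars (snd e)) (map (pcp_equation l) (pcp_steps N k rs))) /\
  (forall y, In y (flat_map (fun e => vars (fst e) ++ vars (snd e)) (map (pcp_equation l) (pcp_steps N k rs))) ->
     (y < N /\ In y (flat_map (fun r0 => vars (subt l (rpos r0))) rs)) \/ k * N <= y).
Proof.
  induction rs as [|r0 rs IH]; intros k Hk Hnd HN Hl HF Hsub; simpl; [split; [constructor|intros y []]|].
  inversion HF as [|x y Hfp HF']; subst. simpl in Hsub.
  destruct (IH (S k)) as [IH1 IH2]; auto; try lia.
  { intros; apply Hnd; simpl; auto. }
  { intros; eapply HN; simpl; eauto. }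
  { eapply NoDup_app_remove_l; eauto. }
  assert (Hsv : forall x, In x (vars (subt l (rpos r0))) -> x < N).
  { intros x Hx. apply Hl. exact (fun_pos_subt_vars Hfp _ Hx). }
  assert (Hlp : forall y, In y (vars (fst (rename_rule (swap_blocks N k) (rrule r0)))) ->
                          k * N <= y < k * N + N).
  { intros y. apply in_vars_rename_swap. intros x Hx. apply (HN r0); simpl; auto.
    apply in_or_app; auto. }
  unfold pcp_equation at 1. simpl. split.
  - rewrite <- app_assoc. apply NoDup_app_iff. split; [|split].
    + unfold rename_rule. simpl. rewrite vars_rename.
      apply NoDup_map_NoDup_ForallPairs; [|apply Hnd; simpl; auto].
      intros a b _ _ E. rewrite <- (swap_blocks_involutive N k a), <- (swap_blocks_involutive N k b).
      congruence.
    + apply NoDup_app_iff. split; [eapply NoDup_app_remove_r; eauto|]. split; auto.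
      intros x Hx Hx2. destruct (IH2 x Hx2) as [[_ Hx3]|Hx3].
      * eapply NoDup_app_disjoint; eauto.
      * pose proof (Hsv x Hx). nia.
    + intros y Hy Hy2. apply Hlp in Hy. apply in_app_or in Hy2 as [Hy2|Hy2].
      * apply Hsv in Hy2. nia.
      * destruct (IH2 y Hy2) as [[Hy3 _]|Hy3]; nia.
  - intros y Hy. rewrite <- app_assoc in Hy. apply in_app_or in Hy as [Hy|Hy].
    + right. apply Hlp in Hy. lia.
    + apply in_app_or in Hy as [Hy|Hy].
      * left. split; auto. apply in_or_app; auto.
      * destruct (IH2 y Hy) as [[Hy3 Hy4]|Hy3].
        -- left. split; auto. apply in_or_app; auto.
        -- right. nia.
Qed.

Section Instance.
Variable A : rule F -> Prop.
Hypothesis A_sub_R : forall lr, A lr -> R lr.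
Variables (l r : term) (s s2 : nat -> term) (u : term) (rs : list (redex F)).
Hypothesis lr_in_R : R (l, r).
Hypothesis D : par_decomp A l s u rs s2.
Hypothesis rs_nonempty : rs <> [].

Let N := S (list_max (rule_vars (l, r) ++ flat_map (fun r0 => rule_vars (rrule r0)) rs)).

Hypothesis not_root_variant : ~ exists r0, rs = [r0] /\ rpos r0 = [] /\
  variant (rename_rule (swap_blocks N 1) (rrule r0)) (l, r).

Let steps := pcp_steps N 1 rs.
Let eqs := map (pcp_equation l) steps.
Let tau := glue_blocks N 1 rs s2.
Let mu := linear_mgu eqs.
Let t := fold_left (fun acc pr => replace_at acc (fst pr) (apply_subst mu (snd (snd pr))))
                   steps (apply_subst mu l).

Lemma lr_vars_lt_N x : In x (rule_vars (l, r)) -> x < N.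
Proof. intros Hx. apply lt_S_list_max. apply in_or_app; auto. Qed.

Lemma redex_vars_lt_N r0 : In r0 rs -> forall x, In x (rule_vars (rrule r0)) -> x < N.
Proof. intros Hr x Hx. apply lt_S_list_max. apply in_or_app; right. apply in_flat_map; eauto. Qed.

Lemma l_vars_lt_N x : In x (vars l) -> x < N.
Proof. intros Hx. apply lr_vars_lt_N, in_or_app; auto. Qed.

Lemma redexes_in_l : Forall (redex_in l s s2) rs.
Proof. eapply Forall_impl; [|exact (pd_redexes D)]. intros r0 [_ H]; exact H. Qed.

Lemma redex_rule_in_R r0 : In r0 rs -> R (rrule r0).
Proof. intros Hr. apply A_sub_R. pose proof (pd_redexes D) as H. rewrite Forall_forall in H. apply H; auto. Qed.

Lemma tau_solves : unifies tau eqs /\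
  map (fun pr : pos * rule F => (fst pr, apply_subst tau (snd (snd pr)))) steps = map (fun r0 => (rpos r0, contractum r0)) rs.
Proof.
  apply (@glue_solves_pcp_equations l N tau s s2 rs 1).
  - lia.
  - exact redex_vars_lt_N.
  - exact l_vars_lt_N.
  - exact redexes_in_l.
  - intros; apply glue_blocks_low; auto.
  - intros; apply glue_blocks_block; auto.
Qed.

Lemma mu_is_mgu : is_mgu mu eqs.
Proof.
  apply linear_mgu_is_mgu; [|exists tau; apply tau_solves].
  destruct (pd_vars D) as [rest Hperm].
  refine (proj1 (@pcp_equations_linear l N rs 1 _ _ _ _ _ _)).
  - lia.
  - intros r0 Hr. pose proof (redex_rule_in_R r0 Hr). destruct (rrule r0). eapply R_left_linear; eauto.
  - exact redex_vars_lt_N.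
  - exact l_vars_lt_N.
  - eapply Forall_impl; [|exact redexes_in_l]. intros r0 [H _]; exact H.
  - eapply NoDup_app_remove_r. exact (Permutation_NoDup Hperm (R_left_linear lr_in_R)).
Qed.

Lemma steps_parallel : ForallOrdPairs (fun a b => parallel (fst a) (fst b)) steps.
Proof.
  apply FOP_map_inv with (Rl := parallel). unfold steps. rewrite pcp_steps_pos.
  eapply FOP_map_in; [exact (pd_parallel D)|]. auto.
Qed.

Lemma pcp_of_redexes : pcp R t (apply_subst mu r).
Proof.
  exists l, r, steps, mu. repeat split.
  - exists (l, r). split; auto. exists (fun x => x). split; [exists (fun x => x); auto|].
    simpl. rewrite !subst_Var. auto.
  - unfold steps. destruct rs; [congruence|discriminate].
  - unfold steps. generalize 1 as k. pose proof redexes_in_l as HF.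
    pose proof redex_rule_in_R as HRs. clearbody N. clear -HF HRs.
    induction rs as [|r0 rs' IH]; intros k; simpl; constructor.
    + inversion HF as [|? ? [Hfp _] _]; subst. split; [|exact Hfp].
      exists (rrule r0). split; [apply HRs; simpl; auto|].
      exists (swap_blocks N k). split; [apply swap_blocks_renaming|auto].
    + apply IH; [inversion HF; auto|intros; apply HRs; simpl; auto].
  - exact steps_parallel.
  - destruct (@pcp_steps_var_disjoint N 1 rs (le_n 1) redex_vars_lt_N) as [H1 H2].
    constructor; auto. eapply Forall_impl; [|exact H1].
    intros rl H x Hx1 Hx2. apply lr_vars_lt_N in Hx1. apply H in Hx2. lia.
  - exact (proj1 mu_is_mgu).
  - exact (proj2 mu_is_mgu).
  - intros lr' Hs Hv. apply not_root_variant. unfold steps in Hs.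
    destruct rs as [|r0 [|]]; try discriminate. injection Hs as E1 E2.
    exists r0. repeat split; auto. rewrite E2. exact Hv.
Qed.

Lemma pcp_instance_result d : (forall x, tau x = apply_subst d (mu x)) -> apply_subst d t = u.
Proof.
  intros Hd.
  assert (Hcomp : forall t0, apply_subst d (apply_subst mu t0) = apply_subst tau t0).
  { intros t0. rewrite subst_subst. apply subst_ext_in. intros; symmetry; auto. }
  unfold t. rewrite <- (fold_left_map_in (fun acc pv => replace_at acc (fst pv) (snd pv))
                          (fun pr : pos * rule F => (fst pr, apply_subst mu (snd (snd pr))))).
  change (apply_subst d (replace_all (apply_subst mu l)
            (map (fun pr : pos * rule F => (fst pr, apply_subst mu (snd (snd pr)))) steps)) = u).
  rewrite subst_replace_all.
  - rewrite map_map, Hcomp, (pd_result D).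
    replace (apply_subst tau l) with (apply_subst s2 l)
      by (apply subst_ext_in; intros; symmetry; apply glue_blocks_low; auto using l_vars_lt_N).
    erewrite map_ext by (intros; simpl; rewrite Hcomp; reflexivity).
    rewrite (proj2 tau_solves). unfold replace_all, contract. rewrite fold_left_map_in. reflexivity.
  - intros pv Hpv. apply in_map_iff in Hpv as [pr [<- Hpr]]. simpl.
    assert (Hin : In (fst pr) (map (@rpos F) rs)).
    { unfold steps in Hpr. rewrite <- (pcp_steps_pos N 1). apply in_map. exact Hpr. }
    apply in_map_iff in Hin as [r0 [E Hr0]]. pose proof redexes_in_l as HF.
    rewrite Forall_forall in HF. destruct (HF r0 Hr0) as [[g [gs Hg]] _]. rewrite <- E.
    erewrite subterm_at_subst; [discriminate|exact Hg].
  - eapply FOP_map_in; [exact steps_parallel|]. auto.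
Qed.

Lemma pcp_instance_conv : conv C u (apply_subst s2 r).
Proof.
  destruct mu_is_mgu as [_ Hgen]. destruct (Hgen tau (proj1 tau_solves)) as [d Hd].
  pose proof (conv_subst d (pcp_conv pcp_of_redexes)) as Hc.
  rewrite (pcp_instance_result d Hd), subst_subst in Hc.
  erewrite subst_ext_in; [exact Hc|]. intros x Hx. cbv beta. rewrite <- Hd.
  symmetry. apply glue_blocks_low; auto. apply lr_vars_lt_N, in_or_app; auto.
Qed.

End Instance.

Lemma par_lhs_instance A (A_sub_R : forall lr, A lr -> R lr) l r (s : nat -> term) u :
  R (l, r) -> par A (apply_subst s l) u ->
  exists s2, (forall x, In x (vars l) -> par A (s x) (s2 x)) /\
    (u = apply_subst s2 l \/ conv C u (apply_subst s2 r)).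
Proof.
  intros HR Hp.
  edestruct par_decomp_exists as [rs [s2 D]]; [exact (R_left_linear HR)|exact Hp|].
  destruct rs as [|r0 rs'] eqn:Ers.
  - exists s2. split; [apply (pd_subst D)|left; apply (pd_result D)].
  - set (N := S (list_max (rule_vars (l, r) ++ flat_map (fun r1 => rule_vars (rrule r1)) rs))).
    rewrite <- Ers in *.
    destruct (classic (exists r1, rs = [r1] /\ rpos r1 = [] /\
                variant (rename_rule (swap_blocks N 1) (rrule r1)) (l, r)))
      as [[r1 [E1 [E2 Hv]]]|Hno].
    + exists s. split; [intros; apply par_refl|right].
      pose proof (pd_redexes D) as Hr1. rewrite E1 in Hr1. inversion Hr1 as [|? ? [_ [_ [Eq _]]] _]; subst.
      rewrite (pd_result D), E1. unfold contract, contractum. simpl. rewrite E2, replace_at_nil.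
      replace (apply_subst (rsubst r1) (snd (rrule r1))) with (apply_subst s r); [apply rst_refl|].
      symmetry. rewrite E2 in Eq. unfold subt in Eq. simpl in Eq.
      rewrite <- (subst_rename_inv (swap_blocks N 1) (swap_blocks N 1)) by apply swap_blocks_involutive.
      destruct (rrule r1) as [lp rp]. unfold rename_rule in Hv. simpl in *.
      eapply variant_contractum; [apply (R_TRS HR)|exact Hv|].
      rewrite subst_rename_inv by apply swap_blocks_involutive. exact Eq.
    + exists s2. split; [apply (pd_subst D)|right].
      apply (@pcp_instance_conv A A_sub_R l r s s2 u rs HR D); [congruence|exact Hno].
Qed.

End ParallelCriticalPairs.

Section ConfluenceFromSubsystem.
Variable F : Type.
Notation term := (term F).
Variable R C : rule F -> Prop.
Hypothesis R_left_linear : left_linear R.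
Hypothesis R_TRS : TRS R.
Hypothesis C_sub_R : forall lr, C lr -> R lr.
Hypothesis pcp_conv : forall t u, pcp R t u -> conv C t u.

Lemma par_subst_rhs A l r (s s2 : nat -> term) : R (l, r) ->
  (forall x, In x (vars l) -> par A (s x) (s2 x)) -> par A (apply_subst s r) (apply_subst s2 r).
Proof. intros HR H. apply par_subst. intros; apply H. apply (R_TRS HR); auto. Qed.

Lemma par_root_peak l r (s : nat -> term) u : R (l, r) -> par R (apply_subst s l) u ->
  exists v1 v2, par R (apply_subst s r) v1 /\ par R u v2 /\ conv C v1 v2.
Proof.
  intros HR Hp.
  destruct (par_lhs_instance R_left_linear R_TRS pcp_conv (A := R) (fun lr H => H) _ _ _ HR Hp)
    as [s2 [Hs2 [Eu|Eu]]]; exists (apply_subst s2 r).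
  - exists (apply_subst s2 r). split; [apply par_subst_rhs with l; auto|].
    split; [subst; constructor; auto|apply rst_refl].
  - exists u. split; [apply par_subst_rhs with l; auto|].
    split; [apply par_refl|apply rst_sym; auto].
Qed.

Lemma par_peak s : forall u1 u2, par R s u1 -> par R s u2 ->
  exists v1 v2, par R u1 v1 /\ par R u2 v2 /\ conv C v1 v2.
Proof.
  assert (root_l : forall l r s0 u1 u2, R (l, r) -> par R (apply_subst s0 l) u2 ->
            u1 = apply_subst s0 r -> exists v1 v2, par R u1 v1 /\ par R u2 v2 /\ conv C v1 v2).
  { intros l r s0 u1 u2 HR Hp ->. exact (par_root_peak s0 HR Hp). }
  assert (root_r : forall l r s0 u1 u2, R (l, r) -> par R (apply_subst s0 l) u1 ->
            u2 = apply_subst s0 r -> exists v1 v2, par R u1 v1 /\ par R u2 v2 /\ conv C v1 v2).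
  { intros l r s0 u1 u2 HR Hp ->. destruct (par_root_peak s0 HR Hp) as [v1 [v2 [P1 [P2 C1]]]].
    exists v2, v1. repeat split; auto. apply rst_sym; auto. }
  induction s as [x|f ts IH] using term_nested_ind; intros u1 u2 H1 H2.
  - inversion H2 as [|f2 ss2 vs2 HF2|l2 r2 s2 HR2 E1 E2]; subst; [|eapply root_r; eauto; congruence].
    inversion H1 as [|f1 ss1 vs1 HF1|l1 r1 s1 HR1 E1 E2]; subst; [|eapply root_l; eauto; congruence].
    exists (Var x), (Var x). split; [constructor|split; [constructor|apply rst_refl]].
  - inversion H2 as [|f2 ss2 vs2 HF2|l2 r2 s2 HR2 E1 E2]; subst; [|eapply root_r; eauto; congruence].
    inversion H1 as [|f1 ss1 vs1 HF1|l1 r1 s1 HR1 E1 E2]; subst; [|eapply root_l; eauto; congruence].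
    assert (Hl : exists ws1 ws2, Forall2 (par R) vs1 ws1 /\ Forall2 (par R) vs2 ws2 /\
                                 Forall2 (conv C) ws1 ws2).
    { clear H1 H2. revert vs1 vs2 HF1 HF2. induction IH as [|t ts Ht Hts IH2]; intros l1 l2 A1 A2;
        inversion A1 as [|a1 b1 la1 lb1 X1 Y1]; inversion A2 as [|a2 b2 la2 lb2 X2 Y2]; subst.
      - exists [], []. repeat constructor.
      - destruct (Ht _ _ X1 X2) as [w1 [w2 [P1 [P2 C1]]]].
        destruct (IH2 _ _ Y1 Y2) as [ws1 [ws2 [Q1 [Q2 Q3]]]].
        exists (w1 :: ws1), (w2 :: ws2). repeat split; constructor; auto. }
    destruct Hl as [ws1 [ws2 [Q1 [Q2 Q3]]]].
    exists (Fun f ws1), (Fun f ws2). split; [constructor; auto|split; [constructor; auto|apply conv_args; auto]].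
Qed.

Lemma ctx_step_par_commute s w : ctx_step C s w -> forall u, par R s u ->
  exists u', par R w u' /\ conv C u u'.
Proof.
  induction 1 as [l r s HC|f ts1 t t' ts2 Hst IH]; intros u Hp.
  - destruct (par_lhs_instance R_left_linear R_TRS pcp_conv (A := R) (fun lr H => H) _ _ _ (C_sub_R HC) Hp)
      as [s2 [Hs2 [Eu|Eu]]]; exists (apply_subst s2 r); split; auto; try (apply par_subst_rhs with l; auto).
    subst u. apply rsteps_conv, rsteps_of_ctx_step. constructor; auto.
  - inversion Hp as [|f' ss us HF E1 E2|l r s0 HR E1 E2]; subst.
    + apply Forall2_app_inv_l in HF as [us1 [us2 [F1 [F2 ->]]]].
      destruct us2 as [|ut us2]; inversion F2; subst.
      destruct (IH ut) as [u't [P1 C1]]; auto.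
      exists (Fun f (us1 ++ u't :: us2)). split; [constructor; apply Forall2_app; auto|].
      apply conv_arg. auto.
    + assert (Hc : par C (apply_subst s0 l) (Fun f (ts1 ++ t' :: ts2))).
      { rewrite E1. apply par_of_ctx_step. constructor. auto. }
      destruct (par_lhs_instance R_left_linear R_TRS pcp_conv C_sub_R _ _ _ HR Hc) as [s2 [Hs2 [Ew|Ew]]].
      * exists (apply_subst s2 r). split; [rewrite Ew; constructor; auto|].
        apply rsteps_conv, rsteps_of_par. apply par_subst_rhs with l; auto.
      * exists (Fun f (ts1 ++ t' :: ts2)). split; [apply par_refl|].
        eapply rst_trans; [apply rsteps_conv, rsteps_of_par; apply par_subst_rhs with l; eauto|].
        apply rst_sym; auto.
Qed.

Lemma rsteps_par_commute s w u : rsteps C s w -> par R s u ->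
  exists u', par R w u' /\ conv C u u'.
Proof.
  intros Hs. revert u. apply rsteps_iff_ctx_steps, clos_rt_rt1n_iff in Hs.
  induction Hs as [|x y z Hxy Hs IH]; intros u Hp; [exists u; split; auto; apply rst_refl|].
  destruct (ctx_step_par_commute Hxy Hp) as [u1 [P1 C1]]. destruct (IH u1 P1) as [u2 [P2 C2]].
  exists u2. split; auto. eapply rst_trans; eauto.
Qed.

Hypothesis C_confluent : confluent C.

Definition conv_par (a b : term) := exists a', conv C a a' /\ par R a' b.

Definition conv_par_steps := clos_refl_trans_1n term conv_par.

Lemma conv_par_diamond a b1 b2 : conv_par a b1 -> conv_par a b2 ->
  exists c1 c2, conv_par b1 c1 /\ conv_par b2 c2 /\ conv C c1 c2.
Proof.
  intros [a1 [C1 P1]] [a2 [C2 P2]].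
  destruct (conv_joinable C_confluent (rst_trans _ _ _ _ _ (rst_sym _ _ _ _ C1) C2)) as [w [W1 W2]].
  destruct (rsteps_par_commute W1 P1) as [b1' [Q1 D1]].
  destruct (rsteps_par_commute W2 P2) as [b2' [Q2 D2]].
  destruct (par_peak Q1 Q2) as [c1 [c2 [E1 [E2 E3]]]].
  exists c1, c2. split; [|split]; auto; eexists; split; eauto.
Qed.

Lemma conv_par_steps_conv_l a0 a b : conv C a0 a -> conv_par_steps a b -> conv_par_steps a0 b.
Proof.
  intros H Hs. destruct Hs as [|y z [a' [Ha' Pa']] Hyz].
  - apply Relation_Operators.rt1n_trans with a; [|constructor].
    exists a. split; auto. apply par_refl.
  - apply Relation_Operators.rt1n_trans with y; auto.
    exists a'. split; auto. eapply rst_trans; eauto.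
Qed.

Lemma conv_par_strip a b1 b2 : conv_par a b1 -> conv_par_steps a b2 ->
  exists c1 c2, conv_par_steps b1 c1 /\ conv_par b2 c2 /\ conv C c1 c2.
Proof.
  intros H1 H2. revert b1 H1. induction H2 as [a|a x b2 Hax Hxb IH]; intros b1 H1.
  - exists b1, b1. split; [constructor|]. split; auto. apply rst_refl.
  - destruct (conv_par_diamond H1 Hax) as [d1 [d2 [D1 [D2 D3]]]].
    destruct (IH d2 D2) as [e1 [e2 [E1 [E2 E3]]]].
    exists e1, e2. split; auto. econstructor; eauto. eapply conv_par_steps_conv_l; eauto.
Qed.

Lemma conv_par_steps_confluent a b1 b2 : conv_par_steps a b1 -> conv_par_steps a b2 ->
  exists c1 c2, conv_par_steps b1 c1 /\ conv_par_steps b2 c2 /\ conv C c1 c2.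
Proof.
  intros H1. revert b2. induction H1 as [a|a x b1 Hax Hxb IH]; intros b2 H2.
  - exists b2, b2. split; auto. split; [constructor|apply rst_refl].
  - destruct (conv_par_strip Hax H2) as [c1 [c2 [S1 [S2 S3]]]].
    destruct (IH c1 S1) as [e1 [e2 [E1 [E2 E3]]]].
    exists e1, e2. split; auto. split; auto. econstructor; eauto.
    eapply conv_par_steps_conv_l; eauto. apply rst_sym; auto.
Qed.

Lemma conv_par_steps_rsteps a b : conv_par_steps a b ->
  forall a0, conv C a0 a -> exists b', rsteps R a0 b' /\ conv C b' b.
Proof.
  induction 1 as [a|a x b [a' [Ca Pa]] Hxb IH]; intros a0 H0; [exists a0; split; auto; apply rt_refl|].
  destruct (conv_joinable C_confluent (rst_trans _ _ _ _ _ H0 Ca)) as [w [W1 W2]].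
  destruct (rsteps_par_commute W2 Pa) as [x' [Px Cx]].
  destruct (IH x' (rst_sym _ _ _ _ Cx)) as [b' [Rb Cb]].
  exists b'. split; auto. eapply rt_trans; [eapply rsteps_mono; [exact C_sub_R|exact W1]|].
  eapply rt_trans; [apply rsteps_of_par; eauto|auto].
Qed.

Lemma rsteps_conv_par_steps a b : rsteps R a b -> conv_par_steps a b.
Proof.
  intros H. apply rsteps_iff_ctx_steps, clos_rt_rt1n_iff in H.
  induction H; econstructor; eauto. exists x. split; [apply rst_refl|apply par_of_ctx_step; auto].
Qed.

Theorem confluent_of_confluent_sub : confluent R.
Proof.
  intros s t1 t2 H1 H2.
  destruct (conv_par_steps_confluent (rsteps_conv_par_steps H1) (rsteps_conv_par_steps H2))
    as [c1 [c2 [Q1 [Q2 Q3]]]].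
  destruct (conv_par_steps_rsteps Q1 (rst_refl _ _ t1)) as [c1' [R1 E1]].
  destruct (conv_par_steps_rsteps Q2 (rst_refl _ _ t2)) as [c2' [R2 E2]].
  destruct (conv_joinable C_confluent (rst_trans _ _ _ _ _ E1 (rst_trans _ _ _ _ _ Q3 (rst_sym _ _ _ _ E2))))
    as [w [W1 W2]].
  exists w. split; eapply rt_trans; eauto; eapply rsteps_mono; eauto.
Qed.

End ConfluenceFromSubsystem.

Theorem corollary15 (F : Type) (R C : rule F -> Prop) :
  TRS R -> left_linear R ->
  (forall lr, C lr -> R lr) ->
  (forall t u, pcp R t u -> conv C t u) ->
  (forall l r, restrict R C (l, r) -> rsteps C l r) ->
  (confluent R <-> confluent C).
Proof.
  intros R_TRS R_left_linear C_sub_R pcp_conv restrict_simulated. split.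
  - intros R_confluent.
    refine (confluent_of_confluent_super _ _ restrict_simulated C_sub_R R_confluent).
    + intros l r HC. apply (R_left_linear l r), C_sub_R, HC.
    + intros l r HC. apply (R_TRS (l, r)), C_sub_R, HC.
  - apply confluent_of_confluent_sub; auto.
Qed.
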